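(* Consider the impulsive time-delay system \[ \dot x(t)=f(t,x_t),\ t\neq t_k;\qquad \Delta x(t)=g(t,x_{t^-}),\ t=t_k;\qquad x_{t_0}=\phi, \] as described in the context. Suppose there exist $V_1\in\mathcal V_0$, $V_2\in\mathcal V_0^*$, functions $\alpha_1,\alpha_2,\alpha_3\in\mathcal K_\infty$, and constants $c\in\mathbb R$, $\varrho_1,\varrho_2,\mu\ge 0$, $\lambda>0$, $\kappa>0$ such that, for all $t\in\mathbb R^+$ and all $\psi\in\mathcal{PC}_\tau$: \begin{itemize} \item[(i)] $\alpha_1(\|\psi(0)\|)\le V_1(t,\psi(0))\le \alpha_2(\|\psi(0)\|)$ and $0\le V_2(t,\psi)\le \alpha_3(\|\psi\|_\tau)$; \item[(ii)] the functional $V(t,\psi):=V_1(t,\psi(0))+V_2(t,\psi)$ satisfies $\mathrm D^+V(t,\psi)\le -c\,V(t,\psi)$; \item[(iii)] $V_1(t,\psi(0)+g(t,\psi))\le \varrho_1 V_1(t^-,\psi(0))+\varrho_2\sup_{s\in[-\tau,0]}V_1(t^-+s,\psi(s))$, where $V_1(t^-+s,y):=\lim_{h\to0^+}V_1(t+s-h,y)$; \item[(iv)] $V_2(t,\psi)\le \kappa\sup_{s\in[-\tau,0]}V_1(t+s,\psi(s))$; \item[(v)] there is a constant $\sigma\in\mathbb R$ such that for all $t>s\ge t_0$, \[ -\sigma N(t,s)-(c-\lambda)(t-s)\le \mu, \] where $\sigma$ is determined as follows (and one of the four cases below holds): \begin{itemize} \item if $c>0$ and $\varrho_1\ge 1$: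 $\sigma=-\ln(\varrho_1+\varrho_2e^{c\tau})\ (\le 0)$; \item if $c>0$, $\varrho_1<1$ and $\varrho_1+[(1-\varrho_1)\kappa+\varrho_2]e^{c\tau}\ge 1$: $\sigma=-\ln\big(\varrho_1+[(1-\varrho_1)\kappa+\varrho_2]e^{c\tau}\big)\ (\le 0)$; \item if $c>0$, $\varrho_1<1$ and $\varrho_1+[(1-\varrho_1)\kappa+\varrho_2]e^{c\tau}<1$: $\sigma>0$ is a constant with $\varrho_1e^{\sigma}+[(1-\varrho_1)\kappa+\varrho_2]e^{c\tau}e^{\sigma N(t_k,t_k-\tau)}\le 1$ for all $k\in\mathbb N$; \item if $c\le 0$, $\varrho_1<1$ and $\varrho_1+(1-\varrho_1)\kappa+\varrho_2<1$: $\sigma>0$ is a constant with $\varrho_1e^{\sigma}+[(1-\varrho_1)\kappa+\varrho_2]e^{\sigma N(t_k,t_k-\tau)}\le 1$ for all $k\in\mathbb N$. \end{itemize} \end{itemize} Then the system is globally asymptotically stable.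
   Context: Let $\tau>0$ be the maximal delay, $\mathcal{PC}_\tau=\mathcal{PC}([-\tau,0],\mathbb R^n)$ the space of piecewise right-continuous functions $[-\tau,0]\to\mathbb R^n$ with norm $\|\varphi\|_\tau=\sup_{s\in[-\tau,0]}\|\varphi(s)\|$ ($\|\cdot\|$ Euclidean). For a piecewise right-continuous $x:[-\tau,\infty)\to\mathbb R^n$, $x_t(s)=x(t+s)$, and $x_{t^-}(s)=x(t+s)$ for $s\in[-\tau,0)$, $x_{t^-}(0)=x(t^-)$ (left limit). $\Delta x(t)=x(t)-x(t^-)$; solutions are right-continuous at impulse times. The maps $f,g:\mathbb R^+\times\mathcal{PC}_\tau\to\mathbb R^n$ satisfy $f(t,0)=g(t,0)=0$, and are assumed regular enough that for every $t_0\ge0$ and $\phi\in\mathcal{PC}_\tau$ there is a unique solution $x(t)=x(t,t_0,\phi)$ on a maximal interval $[t_0-\tau,t_0+\Gamma)$, $0<\Gamma\le\infty$, and that solutions which remain bounded extend globally. The impulse times $t_0<t_1<t_2<\cdots$ form a fixed strictly increasing sequence with $t_k\to\infty$. $N(t,s)$ is the number of impulse times in $(s,t]$ for $t>s\ge t_0$. A function $\alpha:\mathbb R^+\to\mathbb R^+$ is of class $\mathcal K_\infty$ if continuous, strictly increasing, unbounded, with $\alpha(0)=0$. Class $\mathcal V_0$: functions $V:\mathbb R^+\times\mathbb R^n\to\mathbb R^+$ such that for every piecewise right-continuous $x$, $t\mapsto V(t,x(t))$ is piecewise right-continuous and can be discontinuous at $t^*$ only if $x$ is discontinuous at $t^*$.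 Class $\mathcal V_0^*$: functionals $V:\mathbb R^+\times\mathcal{PC}_\tau\to\mathbb R^+$ such that for every piecewise right-continuous $x:[-\tau,\infty)\to\mathbb R^n$, $t\mapsto V(t,x_t)$ is continuous, and $V$ is locally Lipschitz in its second argument. The upper right-hand derivative along the system is $\mathrm D^+V(t,\psi)=\limsup_{h\to0^+}\frac{V(t+h,x^{(t,\psi)}_{t+h})-V(t,\psi)}{h}$, where $x^{(t,\psi)}$ is the solution with $x_t=\psi$ and $h$ is small enough that $(t,t+h)$ contains no impulse time. Global asymptotic stability (GAS): the trivial solution is stable (for every $\varepsilon>0$ there is $\delta>0$ with $\|\phi\|_\tau<\delta\Rightarrow\|x(t,t_0,\phi)\|<\varepsilon$ for all $t\ge t_0$) and $\lim_{t\to\infty}\|x(t,t_0,\phi)\|=0$ for every $\phi\in\mathcal{PC}_\tau$. *)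

From Stdlib Require Import Reals List.
From Stdlib Require Fin.
From Coquelicot Require Import Rbar Lub.
Import ListNotations.
Open Scope R_scope.

Definition Vec (n : nat) := Fin.t n -> R.

Fixpoint sumsq (n : nat) : (Fin.t n -> R) -> R :=
  match n return (Fin.t n -> R) -> R with
  | O => fun _ => 0
  | S m => fun x => (x Fin.F1) ^ 2 + sumsq m (fun i => x (Fin.FS i))
  end.

Definition vnorm {n : nat} (x : Vec n) : R := sqrt (sumsq n x).
Definition vzero {n : nat} : Vec n := fun _ => 0.
Definition vadd {n : nat} (x y : Vec n) : Vec n := fun i => x i + y i.
Definition vsub {n : nat} (x y : Vec n) : Vec n := fun i => x i - y i.
Definition vscal {n : nat} (a : R) (x : Vec n) : Vec n := fun i => a * x i.
Definition vdist {n : nat} (x y : Vec n) : R := vnorm (vsub x y).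
Definition rdist (x y : R) : R := Rabs (x - y).

Definition cont_at {X : Type} (d : X -> X -> R) (x : R -> X) (t : R) : Prop :=
  forall eps, 0 < eps -> exists del, 0 < del /\
    forall u, Rabs (u - t) < del -> d (x u) (x t) < eps.

Definition rcont_at {X : Type} (d : X -> X -> R) (x : R -> X) (t : R) : Prop :=
  forall eps, 0 < eps -> exists del, 0 < del /\
    forall u, t <= u < t + del -> d (x u) (x t) < eps.

Definition has_llim {X : Type} (d : X -> X -> R) (x : R -> X) (t : R) (L : X) : Prop :=
  forall eps, 0 < eps -> exists del, 0 < del /\
    forall u, t - del < u < t -> d (x u) L < eps.

Definition PRC {X : Type} (d : X -> X -> R) (x : R -> X) : Prop :=
  (forall t, rcont_at d x t) /\
  (forall t, exists L, has_llim d x t L) /\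
  (forall a b, exists l : list R,
      forall t, a <= t <= b -> ~ In t l -> cont_at d x t).

(* ---------- the phase space PC_tau ----------
   An element of PC([-tau,0],R^n) is represented by a function R -> Vec n
   which vanishes outside [-tau,0] (normalized representative). *)
Definition PC {n : nat} (tau : R) (psi : R -> Vec n) : Prop :=
  (forall s, ~ (-tau <= s <= 0) -> psi s = vzero) /\
  (forall s, -tau <= s < 0 -> forall eps, 0 < eps -> exists del, 0 < del /\
      forall u, s <= u < s + del -> u <= 0 -> vdist (psi u) (psi s) < eps) /\
  (forall s, -tau < s <= 0 -> exists L, has_llim vdist psi s L) /\
  (exists l : list R, forall s, -tau < s < 0 -> ~ In s l -> cont_at vdist psi s).

Definition supnorm {n : nat} (tau : R) (psi : R -> Vec n) : R :=
  real (Lub_Rbar (fun r => exists s, -tau <= s <= 0 /\ r = vnorm (psi s))).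

Definition fsub {n : nat} (psi phi : R -> Vec n) : R -> Vec n :=
  fun s => vsub (psi s) (phi s).

Definition seg {n : nat} (tau : R) (x : R -> Vec n) (t : R) : R -> Vec n :=
  fun s => if Rle_dec (-tau) s then if Rle_dec s 0 then x (t + s) else vzero
           else vzero.

(* x_{t^-}, where L = x(t^-) *)
Definition segm {n : nat} (tau : R) (x : R -> Vec n) (t : R) (L : Vec n)
  : R -> Vec n :=
  fun s => if Rle_dec (-tau) s then
             if Rlt_dec s 0 then x (t + s)
             else if Req_EM_T s 0 then L else vzero
           else vzero.

Definition right_deriv {n : nat} (x : R -> Vec n) (t : R) (v : Vec n) : Prop :=
  forall eps, 0 < eps -> exists del, 0 < del /\
    forall h, 0 < h < del ->
      vnorm (vsub (vsub (x (t + h)) (x t)) (vscal h v)) <= eps * h.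

Definition IsSolOn {n : nat} (tau : R) (tk : nat -> R)
  (f g : R -> (R -> Vec n) -> Vec n) (s0 : R) (psi : R -> Vec n) (T : R)
  (x : R -> Vec n) : Prop :=
  (forall s, -tau <= s <= 0 -> x (s0 + s) = psi s) /\
  (forall t, s0 <= t < s0 + T -> right_deriv x t (f t (seg tau x t))) /\
  (forall t, s0 < t < s0 + T -> (forall k, tk k <> t) -> cont_at vdist x t) /\
  (forall k, s0 < tk k < s0 + T -> exists L, has_llim vdist x (tk k) L /\
      x (tk k) = vadd L (g (tk k) (segm tau x (tk k) L))).

(* standing regularity assumption: for every initial time s0 >= 0 and
   psi in PC_tau there is a unique solution on a maximal interval
   [s0 - tau, s0 + Gam), and a solution that stays bounded is global *)
Definition WellPosed {n : nat} (tau : R) (tk : nat -> R)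
  (f g : R -> (R -> Vec n) -> Vec n) : Prop :=
  forall s0 (psi : R -> Vec n), 0 <= s0 -> PC tau psi ->
  exists (x : R -> Vec n) (Gam : Rbar),
    Rbar_lt (Finite 0) Gam /\
    (forall T, 0 < T -> Rbar_le (Finite T) Gam -> IsSolOn tau tk f g s0 psi T x) /\
    (forall T y, 0 < T -> IsSolOn tau tk f g s0 psi T y ->
       Rbar_le (Finite T) Gam /\
       forall t, s0 - tau <= t < s0 + T -> y t = x t) /\
    (forall G, Gam = Finite G ->
       forall M, exists t, s0 <= t < s0 + G /\ M < vnorm (x t)).

(* N(t,s): number of impulse times t_k (k >= 1) in (s,t] *)
Definition IsN (tk : nat -> R) (t s : R) (m : nat) : Prop :=
  exists K : nat, (forall k, (K <= k)%nat -> t < tk k) /\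
    m = length (filter (fun k => if Rlt_dec s (tk k) then
                                   if Rle_dec (tk k) t then true else false
                                 else false) (seq 1 K)).

Definition Kinf (a : R -> R) : Prop :=
  a 0 = 0 /\
  (forall x, 0 <= x -> forall eps, 0 < eps -> exists del, 0 < del /\
      forall y, 0 <= y -> Rabs (y - x) < del -> Rabs (a y - a x) < eps) /\
  (forall x y, 0 <= x -> x < y -> a x < a y) /\
  (forall M, exists x, 0 <= x /\ M < a x).

(* class V_0 (time domain taken to be all of R) *)
Definition V0 {n : nat} (V : R -> Vec n -> R) : Prop :=
  (forall t y, 0 <= V t y) /\
  (forall x : R -> Vec n, PRC vdist x ->
     PRC rdist (fun t => V t (x t)) /\
     (forall t, cont_at vdist x t -> cont_at rdist (fun u => V u (x u)) t)).

Definition V0star {n : nat} (tau : R) (V : R -> (R -> Vec n) -> R) : Prop :=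
  (forall t psi, 0 <= t -> PC tau psi -> 0 <= V t psi) /\
  (forall x : R -> Vec n, PRC vdist x -> forall t, 0 <= t ->
     forall eps, 0 < eps -> exists del, 0 < del /\
       forall u, 0 <= u -> Rabs (u - t) < del ->
         Rabs (V u (seg tau x u) - V t (seg tau x t)) < eps) /\
  (forall t psi, 0 <= t -> PC tau psi -> exists r Lc, 0 < r /\
     forall psi1 psi2, PC tau psi1 -> PC tau psi2 ->
       supnorm tau (fsub psi1 psi) < r -> supnorm tau (fsub psi2 psi) < r ->
       Rabs (V t psi1 - V t psi2) <= Lc * supnorm tau (fsub psi1 psi2)).

Definition GAS {n : nat} (tau : R) (tk : nat -> R)
  (f g : R -> (R -> Vec n) -> Vec n) (t0 : R) : Prop :=
  (forall eps, 0 < eps -> exists del, 0 < del /\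
     forall phi : R -> Vec n, PC tau phi -> supnorm tau phi < del ->
     forall T x, 0 < T -> IsSolOn tau tk f g t0 phi T x ->
     forall t, t0 <= t < t0 + T -> vnorm (x t) < eps) /\
  (forall phi : R -> Vec n, PC tau phi -> exists x,
     (forall T, 0 < T -> IsSolOn tau tk f g t0 phi T x) /\
     forall eps, 0 < eps -> exists T0, forall t, T0 <= t -> vnorm (x t) < eps).

From Stdlib Require Import Reals Lra Lia List FunctionalExtensionality Classical.
From Coquelicot Require Import Rbar Lub.
Open Scope R_scope.

(* Along a solution, V(t) = V1(t, x(t)) + V2(t, x_t) satisfies D^+V <= -cV between impulses,
   so a comparison argument makes it decay like exp(-(c - lam/2) t) there.  At an impulse,
   (iii) bounds the new value of V1 by its left value and by the history of V1 over the delay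
   window, and (iv) bounds V2 by that history; the bounds already obtained on earlier intervals
   control this history by exp(ph) times the current bound, where ph depends on the number of
   impulses in the window.  The choice of sigma in (v) makes every impulse multiply the bound by
   at most exp(-sigma), hence
     V(t) <= M0 exp(-sigma N(t, t0) - (c - lam/2)(t - t0)) <= M0 exp(mu) exp(-lam (t - t0) / 2)
   by (v).  This gives stability and attractivity, and excludes blow-up, so solutions are global. *)

Lemma sumsq_nonneg n (x : Fin.t n -> R) : 0 <= sumsq n x.
Proof. induction n; simpl; [lra|]. specialize (IHn (fun i => x (Fin.FS i))). nra. Qed.

Lemma vnorm_nonneg n (x : Vec n) : 0 <= vnorm x.
Proof. apply sqrt_pos. Qed.

Lemma vnorm_vzero n : vnorm (@vzero n) = 0.
Proof.
  assert (Hsq : forall m, sumsq m (fun _ => 0) = 0).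
  { induction m; simpl; [reflexivity|]. rewrite IHm. ring. }
  unfold vnorm, vzero. rewrite Hsq. apply sqrt_0.
Qed.

Lemma vnorm_vscal n a (x : Vec n) : vnorm (vscal a x) = Rabs a * vnorm x.
Proof.
  assert (Hsq : forall m (y : Fin.t m -> R), sumsq m (fun i => a * y i) = a ^ 2 * sumsq m y).
  { induction m; intros y; simpl; [ring|]. rewrite (IHm (fun i => y (Fin.FS i))). ring. }
  unfold vnorm, vscal. rewrite Hsq, sqrt_mult_alt by nra.
  f_equal. rewrite <- sqrt_Rsqr_abs. unfold Rsqr. f_equal. ring.
Qed.

Lemma plane_triangle A B p q : 0 <= p -> 0 <= q ->
  sqrt ((A + B) ^ 2 + (p + q) ^ 2) <= sqrt (A ^ 2 + p ^ 2) + sqrt (B ^ 2 + q ^ 2).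
Proof.
  intros Hp Hq.
  assert (Hcs : A * B + p * q <= sqrt (A ^ 2 + p ^ 2) * sqrt (B ^ 2 + q ^ 2)).
  { rewrite <- sqrt_mult by nra.
    destruct (Rle_dec (A * B + p * q) 0).
    { pose proof (sqrt_pos ((A ^ 2 + p ^ 2) * (B ^ 2 + q ^ 2))). lra. }
    rewrite <- (sqrt_square (A * B + p * q)) by lra.
    apply sqrt_le_1_alt. pose proof (pow2_ge_0 (A * q - B * p)). nra. }
  pose proof (sqrt_pos (A ^ 2 + p ^ 2)). pose proof (sqrt_pos (B ^ 2 + q ^ 2)).
  rewrite <- (sqrt_square (sqrt (A ^ 2 + p ^ 2) + sqrt (B ^ 2 + q ^ 2))) by lra.
  apply sqrt_le_1_alt.
  rewrite Rmult_plus_distr_l, !Rmult_plus_distr_r, !sqrt_sqrt by nra. nra.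
Qed.

(* Minkowski by induction: the step is [plane_triangle] applied to [(x_1, |x'|)] and [(y_1, |y'|)]. *)
Lemma vnorm_triangle n (x y : Vec n) : vnorm (vadd x y) <= vnorm x + vnorm y.
Proof.
  unfold vnorm, vadd. induction n as [|n IH]; simpl; [rewrite sqrt_0; lra|].
  specialize (IH (fun i => x (Fin.FS i)) (fun i => y (Fin.FS i))). simpl in IH.
  set (Sx := sumsq n (fun i => x (Fin.FS i))) in *.
  set (Sy := sumsq n (fun i => y (Fin.FS i))) in *.
  set (Sxy := sumsq n (fun i => x (Fin.FS i) + y (Fin.FS i))) in *.
  pose proof (sumsq_nonneg n (fun i => x (Fin.FS i))).
  pose proof (sumsq_nonneg n (fun i => y (Fin.FS i))).
  pose proof (sumsq_nonneg n (fun i => x (Fin.FS i) + y (Fin.FS i))).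
  assert (Hsub : Sxy <= (sqrt Sx + sqrt Sy) ^ 2).
  { rewrite <- (pow2_sqrt Sxy) by assumption. pose proof (sqrt_pos Sxy). nra. }
  eapply Rle_trans; [apply sqrt_le_1_alt; apply Rplus_le_compat_l, Hsub|].
  rewrite <- (pow2_sqrt Sx) at 2 by assumption. rewrite <- (pow2_sqrt Sy) at 2 by assumption.
  apply plane_triangle; apply sqrt_pos.
Qed.

Lemma vdist_refl n (x : Vec n) : vdist x x = 0.
Proof.
  unfold vdist. replace (vsub x x) with (@vzero n); [apply vnorm_vzero|].
  apply functional_extensionality; intro i; unfold vzero, vsub; ring.
Qed.

Lemma vnorm_le_vdist n (x y : Vec n) : vnorm x <= vdist x y + vnorm y.
Proof.
  unfold vdist. replace x with (vadd (vsub x y) y) at 1; [apply vnorm_triangle|].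
  apply functional_extensionality; intro i; unfold vadd, vsub; ring.
Qed.

(** * Left continuity, real induction and a Dini comparison lemma *)

Definition leftcont (w : R -> R) (p : R) : Prop :=
  forall eps, 0 < eps -> exists del, 0 < del /\
    forall u, p - del < u <= p -> Rabs (w u - w p) < eps.

Lemma leftcont_of_continuity_pt (w : R -> R) p : continuity_pt w p -> leftcont w p.
Proof.
  intros Hw eps Heps. destruct (Hw eps Heps) as [del [Hdel Hnear]].
  exists del. split; [exact Hdel|]. intros u Hu.
  destruct (Req_dec u p) as [->|Hne].
  - rewrite Rminus_diag, Rabs_R0. exact Heps.
  - apply (Hnear u). split.
    + split; [exact I | congruence].
    + simpl. unfold Rdist. rewrite Rabs_left1 by lra. lra.
Qed.

Lemma leftcont_of_cont_at (w : R -> R) t : cont_at rdist w t -> leftcont w t.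
Proof.
  intros Hw eps He. destruct (Hw eps He) as [d [Hd H]]. exists d. split; [assumption|].
  intros u Hu. apply H. apply Rabs_def1; lra.
Qed.

Lemma real_induction (P : R -> Prop) a b : a <= b -> P a ->
  (forall r, a < r <= b -> (forall s, a <= s < r -> P s) -> P r) ->
  (forall r, a <= r < b -> (forall s, a <= s <= r -> P s) ->
     exists h, 0 < h /\ forall s, r < s < r + h -> P s) ->
  forall t, a <= t <= b -> P t.
Proof.
  intros Hab Ha Hclosed Hstep.
  set (E := fun x => a <= x <= b /\ forall s, a <= s <= x -> P s).
  assert (HEa : E a) by (split; [lra | intros s Hs; replace s with a by lra; exact Ha]).
  destruct (completeness E) as [r [Hub Hlub]].
  { exists b. intros x [Hx _]. lra. }
  { exists a. exact HEa. }
  assert (Har : a <= r) by (apply Hub; exact HEa).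
  assert (Hrb : r <= b) by (apply Hlub; intros x [Hx _]; lra).
  assert (Hbelow : forall s, a <= s < r -> P s).
  { intros s Hs. apply NNPP. intros HnP.
    assert (r <= s); [|lra].
    apply Hlub. intros x [_ Hx]. destruct (Rle_dec x s) as [|Hxs]; [assumption|].
    exfalso. apply HnP, Hx. lra. }
  assert (HEr : E r).
  { split; [lra|]. intros s Hs. destruct (Rlt_le_dec s r) as [|Hsr]; [apply Hbelow; lra|].
    replace s with r by lra. destruct (Req_dec r a) as [->|]; [exact Ha|].
    apply Hclosed; [lra | exact Hbelow]. }
  assert (Hr : r = b).
  { destruct (Req_dec r b) as [|Hne]; [assumption|]. exfalso.
    destruct (Hstep r ltac:(lra) (proj2 HEr)) as [h [Hh Hnext]].
    set (r' := r + Rmin h (b - r) / 2).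
    assert (0 < Rmin h (b - r) <= h) by (split; [apply Rmin_pos | apply Rmin_l]; lra).
    assert (Rmin h (b - r) <= b - r) by apply Rmin_r.
    assert (r' <= r) by (apply Hub; split; [unfold r'; lra|]; intros s Hs;
      destruct (Rle_dec s r); [apply (proj2 HEr); lra | apply Hnext; unfold r' in *; lra]).
    unfold r' in *. lra. }
  intros t Ht. apply (proj2 HEr). lra.
Qed.

Lemma leftcont_le (w G : R -> R) p d0 : 0 < d0 -> leftcont w p -> leftcont G p ->
  (forall u, p - d0 < u < p -> w u <= G u) -> w p <= G p.
Proof.
  intros Hd0 Hw HG Hle. apply Rnot_lt_le. intros Hgt. set (gap := w p - G p).
  destruct (Hw (gap / 2)) as [d1 [Hd1 H1]]; [unfold gap; lra|].
  destruct (HG (gap / 2)) as [d2 [Hd2 H2]]; [unfold gap; lra|].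
  set (m := Rmin d0 (Rmin d1 d2)).
  assert (0 < m) by (unfold m; repeat apply Rmin_pos; lra).
  assert (m <= d0 /\ m <= d1 /\ m <= d2) as (? & ? & ?).
  { unfold m. repeat split; [apply Rmin_l | |];
      (eapply Rle_trans; [apply Rmin_r | first [apply Rmin_l | apply Rmin_r]]). }
  specialize (H1 (p - m / 2) ltac:(lra)). specialize (H2 (p - m / 2) ltac:(lra)).
  specialize (Hle (p - m / 2) ltac:(lra)).
  apply Rabs_def2 in H1. apply Rabs_def2 in H2. unfold gap in *. lra.
Qed.

Lemma leftcont_eq (w w' : R -> R) p d0 : 0 < d0 -> leftcont w p -> leftcont w' p ->
  (forall u, p - d0 < u < p -> w u = w' u) -> w p = w' p.
Proof.
  intros Hd0 Hw Hw' Heq. apply Rle_antisym.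
  - apply (leftcont_le w w' p d0); [assumption.. |]. intros u Hu. rewrite Heq by assumption. lra.
  - apply (leftcont_le w' w p d0); [assumption.. |]. intros u Hu. rewrite Heq by assumption. lra.
Qed.

Lemma leftcont_ext (w w' : R -> R) t d0 : 0 < d0 -> leftcont w t ->
  (forall u, t - d0 < u <= t -> w' u = w u) -> leftcont w' t.
Proof.
  intros Hd0 Hw Heq eps He. destruct (Hw eps He) as [d [Hd H]].
  exists (Rmin d d0). split; [apply Rmin_pos; lra|]. intros u Hu.
  pose proof (Rmin_l d d0). pose proof (Rmin_r d d0).
  rewrite !Heq by lra. apply H. lra.
Qed.

Lemma leftcont_plus (w1 w2 : R -> R) t : leftcont w1 t -> leftcont w2 t ->
  leftcont (fun u => w1 u + w2 u) t.
Proof.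
  intros H1 H2 eps He. destruct (H1 (eps / 2) ltac:(lra)) as [d1 [Hd1 K1]].
  destruct (H2 (eps / 2) ltac:(lra)) as [d2 [Hd2 K2]].
  exists (Rmin d1 d2). split; [apply Rmin_pos; lra|]. intros u Hu.
  pose proof (Rmin_l d1 d2). pose proof (Rmin_r d1 d2).
  specialize (K1 u ltac:(lra)). specialize (K2 u ltac:(lra)).
  replace (w1 u + w2 u - (w1 t + w2 t)) with ((w1 u - w1 t) + (w2 u - w2 t)) by ring.
  eapply Rle_lt_trans; [apply Rabs_triang | lra].
Qed.

Definition upper_dini_le (w : R -> R) (c b t : R) : Prop :=
  forall eps, 0 < eps -> exists del, 0 < del /\
    forall h, 0 < h < del -> h < b - t -> (w (t + h) - w t) / h <= - c * w t + eps.

Lemma upper_dini_le_restrict (w w' : R -> R) c b b' t : b <= b' ->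
  (forall u, t <= u < b -> w' u = w u) -> upper_dini_le w c b' t -> upper_dini_le w' c b t.
Proof.
  intros Hb Heq Hw eps He. destruct (Hw eps He) as [d [Hd H]]. exists d. split; [assumption|].
  intros h Hh Hhb. rewrite !Heq by lra. apply H; lra.
Qed.

(* We need [c h < 1] to multiply [w r <= g] by [1 - c h]. *)
Lemma upper_dini_le_step (w : R -> R) c c' b r g : c' < c -> 0 < g -> w r <= g -> r < b ->
  upper_dini_le w c b r -> exists h0, 0 < h0 /\ forall h, 0 < h < h0 -> w (r + h) <= g * (1 - c' * h).
Proof.
  intros Hc Hg Hwr Hrb Hd.
  destruct (Hd ((c - c') * g / 2)) as [del [Hdel Hquot]]; [nra|].
  set (h0 := Rmin (Rmin del (/ (Rabs c + 1))) (b - r)).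
  assert (Hc1 : 0 < / (Rabs c + 1)) by (apply Rinv_0_lt_compat; pose proof (Rabs_pos c); lra).
  assert (0 < h0) by (unfold h0; repeat apply Rmin_pos; lra).
  assert (h0 <= del /\ h0 <= / (Rabs c + 1) /\ h0 <= b - r) as (? & ? & ?).
  { unfold h0. repeat split; [ | | apply Rmin_r];
      (eapply Rle_trans; [apply Rmin_l | first [apply Rmin_l | apply Rmin_r]]). }
  exists h0. split; [assumption|]. intros h Hh.
  specialize (Hquot h ltac:(lra) ltac:(lra)).
  assert (Hincr : w (r + h) - w r <= h * (- c * w r + (c - c') * g / 2)).
  { apply Rmult_le_compat_l with (r := h) in Hquot; [|lra].
    unfold Rdiv in Hquot. rewrite <- Rmult_assoc, (Rmult_comm h), Rmult_assoc, Rinv_r, Rmult_1_r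
      in Hquot by lra. exact Hquot. }
  assert (Hch : c * h < 1).
  { assert (h * (Rabs c + 1) < 1).
    { assert (Hlt : h < / (Rabs c + 1)) by lra.
      apply Rmult_lt_compat_r with (r := Rabs c + 1) in Hlt; [|pose proof (Rabs_pos c); lra].
      rewrite Rinv_l in Hlt by (pose proof (Rabs_pos c); lra). exact Hlt. }
    pose proof (Rle_abs c). pose proof (Rabs_pos c). nra. }
  assert (0 <= (g - w r) * (1 - c * h)) by (apply Rmult_le_pos; lra).
  assert (0 <= h * ((c - c') * g / 2)) by (apply Rmult_le_pos; nra).
  nra.
Qed.

(* The gap [c' < c] provides the slack that absorbs the [eps] of the Dini bound. *)
Lemma upper_dini_comparison (w : R -> R) a b c c' G0 : a <= b -> c' < c -> 0 < G0 -> w a <= G0 ->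
  (forall t, a < t <= b -> leftcont w t) ->
  (forall t, a <= t < b -> upper_dini_le w c b t) ->
  forall t, a <= t <= b -> w t <= G0 * exp (- c' * (t - a)).
Proof.
  intros Hab Hc HG0 Ha Hlc Hd.
  set (G := fun u => G0 * exp (- c' * (u - a))).
  assert (HGpos : forall u, 0 < G u) by (intros u; unfold G; pose proof (exp_pos (- c' * (u - a))); nra).
  apply (real_induction (fun t => w t <= G t)); [assumption | | |].
  - unfold G. rewrite Rminus_diag, Rmult_0_r, exp_0. lra.
  - intros r Hr Hbelow. apply (leftcont_le w G r (r - a)); [lra | apply Hlc; lra | |].
    + apply leftcont_of_continuity_pt. unfold G. reg.
    + intros u Hu. apply Hbelow. lra.
  - intros r Hr Hupto.
    destruct (upper_dini_le_step w c c' b r (G r) Hc (HGpos r) (Hupto r ltac:(lra)) ltac:(lra)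
      (Hd r Hr)) as [h0 [Hh0 Hnext]].
    exists h0. split; [assumption|]. intros s Hs.
    replace s with (r + (s - r)) by ring. eapply Rle_trans; [apply Hnext; lra|].
    unfold G. replace (- c' * (r + (s - r) - a)) with (- c' * (r - a) + - c' * (s - r)) by ring.
    rewrite exp_plus, <- Rmult_assoc. apply Rmult_le_compat_l.
    + pose proof (exp_pos (- c' * (r - a))). nra.
    + pose proof (exp_ineq1_le (- c' * (s - r))). lra.
Qed.




(** * Piecewise right-continuous functions *)

Lemma right_deriv_rcont n (x : R -> Vec n) t v : right_deriv x t v -> rcont_at vdist x t.
Proof.
  intros Hrd eps He. destruct (Hrd 1 ltac:(lra)) as [d [Hd Hquot]].
  assert (Hv : 0 <= vnorm v) by apply vnorm_nonneg.
  set (m := Rmin d (eps / (2 * (vnorm v + 1)))).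
  assert (Hq : 0 < eps / (2 * (vnorm v + 1))) by (apply Rdiv_lt_0_compat; lra).
  assert (m <= d /\ m <= eps / (2 * (vnorm v + 1))) as [Hm1 Hm2]
    by (split; [apply Rmin_l | apply Rmin_r]).
  exists m. split; [apply Rmin_pos; lra|]. intros u Hu.
  destruct (Req_dec u t) as [->|Hne]; [rewrite vdist_refl; lra|].
  set (h := u - t). specialize (Hquot h ltac:(unfold h; lra)).
  replace (t + h) with u in Hquot by (unfold h; ring).
  pose proof (vnorm_le_vdist _ (vsub (x u) (x t)) (vscal h v)) as Htri.
  unfold vdist at 1 in Htri. rewrite vnorm_vscal, Rabs_right in Htri by (unfold h; lra).
  assert (h * (2 * (vnorm v + 1)) < eps).
  { assert (Hh : h < eps / (2 * (vnorm v + 1))) by (unfold h; lra).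
    apply Rmult_lt_compat_r with (r := 2 * (vnorm v + 1)) in Hh; [|lra].
    unfold Rdiv in Hh. rewrite Rmult_assoc, Rinv_l in Hh by lra. lra. }
  unfold vdist. assert (0 < h) by (unfold h; lra). nra.
Qed.

Section Locality.
Variables (X : Type) (d : X -> X -> R).

Lemma cont_at_local (x y : R -> X) t r : 0 < r ->
  (forall u, Rabs (u - t) < r -> y u = x u) -> cont_at d x t -> cont_at d y t.
Proof.
  intros Hr Heq Hx eps He. destruct (Hx eps He) as [del [Hdel H]].
  exists (Rmin del r). split; [apply Rmin_pos; lra|]. intros u Hu.
  pose proof (Rmin_l del r). pose proof (Rmin_r del r).
  rewrite !Heq by (rewrite ?Rminus_diag, ?Rabs_R0; lra). apply H. lra.
Qed.

Lemma rcont_at_local (x y : R -> X) t r : 0 < r ->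
  (forall u, t <= u < t + r -> y u = x u) -> rcont_at d x t -> rcont_at d y t.
Proof.
  intros Hr Heq Hx eps He. destruct (Hx eps He) as [del [Hdel H]].
  exists (Rmin del r). split; [apply Rmin_pos; lra|]. intros u Hu.
  pose proof (Rmin_l del r). pose proof (Rmin_r del r).
  rewrite !Heq by lra. apply H. lra.
Qed.

Lemma has_llim_local (x y : R -> X) t L r : 0 < r ->
  (forall u, t - r < u < t -> y u = x u) -> has_llim d x t L -> has_llim d y t L.
Proof.
  intros Hr Heq Hx eps He. destruct (Hx eps He) as [del [Hdel H]].
  exists (Rmin del r). split; [apply Rmin_pos; lra|]. intros u Hu.
  pose proof (Rmin_l del r). pose proof (Rmin_r del r).
  rewrite Heq by lra. apply H. lra.
Qed.

Lemma has_llim_of_cont_at (x : R -> X) t : cont_at d x t -> has_llim d x t (x t).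
Proof.
  intros Hx eps He. destruct (Hx eps He) as [del [Hdel H]]. exists del. split; [assumption|].
  intros u Hu. apply H. apply Rabs_def1; lra.
Qed.

End Locality.

Section Constant.
Variables (n : nat) (y : Vec n).

Lemma cont_at_const t : cont_at vdist (fun _ => y) t.
Proof. intros eps He. exists 1. split; [lra|]. intros. rewrite vdist_refl. exact He. Qed.

Lemma rcont_at_const t : rcont_at vdist (fun _ => y) t.
Proof. intros eps He. exists 1. split; [lra|]. intros. rewrite vdist_refl. exact He. Qed.

Lemma has_llim_const t : has_llim vdist (fun _ => y) t y.
Proof. intros eps He. exists 1. split; [lra|]. intros. rewrite vdist_refl. exact He. Qed.

Lemma PRC_const : PRC vdist (fun _ => y).
Proof.
  split; [|split]; [apply rcont_at_const | intros t; exists y; apply has_llim_const |].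
  intros a b. exists nil. intros t _ _. apply cont_at_const.
Qed.

End Constant.

(* Turns a solution known on [[a, e)] into a PRC function on all of [R], as the classes
   V0 and V0^* require; with [L = x(e^-)] its segment at [e] is [x_{e^-}] ([seg_clamp_end]). *)
Definition clamp {n : nat} (x : R -> Vec n) (a e : R) (L : Vec n) (u : R) : Vec n :=
  if Rlt_dec u a then x a else if Rlt_dec u e then x u else L.

Section Clamp.
Variables (n : nat) (x : R -> Vec n) (a e : R) (L : Vec n).
Hypotheses (Hae : a < e)
  (Hrc : forall t, a <= t < e -> rcont_at vdist x t)
  (Hll : forall t, a < t < e -> exists L', has_llim vdist x t L')
  (HL : has_llim vdist x e L)
  (Hfin : exists l, forall t, a < t < e -> ~ In t l -> cont_at vdist x t).

Lemma clamp_in u : a <= u < e -> clamp x a e L u = x u.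
Proof.
  intros Hu. unfold clamp. destruct (Rlt_dec u a); [lra|]. destruct (Rlt_dec u e); [reflexivity | lra].
Qed.

Lemma clamp_before u : u < a -> clamp x a e L u = x a.
Proof. intros Hu. unfold clamp. destruct (Rlt_dec u a); [reflexivity | lra]. Qed.

Lemma clamp_after u : e <= u -> clamp x a e L u = L.
Proof.
  intros Hu. unfold clamp. destruct (Rlt_dec u a); [lra|]. destruct (Rlt_dec u e); [lra | reflexivity].
Qed.

Lemma clamp_PRC : PRC vdist (clamp x a e L).
Proof.
  split; [|split].
  - intros t. destruct (Rlt_le_dec t a); [|destruct (Rlt_le_dec t e)].
    + apply (rcont_at_local _ _ (fun _ => x a) _ t (a - t)); [lra | | apply rcont_at_const].
      intros u Hu. apply clamp_before. lra.
    + apply (rcont_at_local _ _ x _ t (e - t)); [lra | | apply Hrc; lra].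
      intros u Hu. apply clamp_in. lra.
    + apply (rcont_at_local _ _ (fun _ => L) _ t 1); [lra | | apply rcont_at_const].
      intros u Hu. apply clamp_after. lra.
  - intros t. destruct (Rle_lt_dec t a); [|destruct (Rlt_le_dec t e)].
    + exists (x a). apply (has_llim_local _ _ (fun _ => x a) _ t _ 1); [lra | | apply has_llim_const].
      intros u Hu. apply clamp_before. lra.
    + destruct (Hll t ltac:(lra)) as [L' HL']. exists L'.
      apply (has_llim_local _ _ x _ t _ (t - a)); [lra | | exact HL'].
      intros u Hu. apply clamp_in. lra.
    + exists L. destruct (Req_dec t e) as [->|Hne].
      * apply (has_llim_local _ _ x _ e _ (e - a)); [lra | | exact HL].
        intros u Hu. apply clamp_in. lra.
      * apply (has_llim_local _ _ (fun _ => L) _ t _ (t - e)); [lra | | apply has_llim_const].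
        intros u Hu. apply clamp_after. lra.
  - intros p q. destruct Hfin as [l Hl]. exists (a :: e :: l). intros t _ Hnot.
    assert (Htl : ~ In t l) by (intros Hin; apply Hnot; simpl; tauto).
    assert (Hta : t <> a) by (intros ->; apply Hnot; simpl; tauto).
    assert (Hte : t <> e) by (intros ->; apply Hnot; simpl; tauto).
    destruct (Rlt_le_dec t a); [|destruct (Rlt_le_dec t e)].
    + apply (cont_at_local _ _ (fun _ => x a) _ t (a - t)); [lra | | apply cont_at_const].
      intros u Hu. apply Rabs_def2 in Hu. apply clamp_before. lra.
    + apply (cont_at_local _ _ x _ t (Rmin (t - a) (e - t)));
        [apply Rmin_pos; lra | | apply Hl; [lra | exact Htl]].
      intros u Hu. apply Rabs_def2 in Hu. pose proof (Rmin_l (t - a) (e - t)).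
      pose proof (Rmin_r (t - a) (e - t)). apply clamp_in. lra.
    + apply (cont_at_local _ _ (fun _ => L) _ t (t - e)); [lra | | apply cont_at_const].
      intros u Hu. apply Rabs_def2 in Hu. apply clamp_after. lra.
Qed.

Lemma clamp_cont_at_end : cont_at vdist (clamp x a e L) e.
Proof.
  intros eps He. destruct (HL eps He) as [d [Hd H]].
  exists (Rmin d (e - a)). split; [apply Rmin_pos; lra|]. intros u Hu.
  pose proof (Rmin_l d (e - a)). pose proof (Rmin_r d (e - a)). apply Rabs_def2 in Hu.
  rewrite (clamp_after e) by lra. destruct (Rlt_le_dec u e).
  - rewrite clamp_in by lra. apply H. lra.
  - rewrite clamp_after, vdist_refl by lra. exact He.
Qed.

Lemma seg_clamp_end tau : a <= e - tau -> seg tau (clamp x a e L) e = segm tau x e L.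
Proof.
  intros Ha. apply functional_extensionality; intro s. unfold seg, segm.
  destruct (Rle_dec (-tau) s); [|reflexivity]. destruct (Rle_dec s 0).
  - destruct (Rlt_dec s 0); [apply clamp_in; lra|].
    destruct (Req_EM_T s 0); [|lra]. subst s. rewrite Rplus_0_r. apply clamp_after. lra.
  - destruct (Rlt_dec s 0); [lra|]. destruct (Req_EM_T s 0); [lra | reflexivity].
Qed.

End Clamp.

Lemma PC_bounded n tau (psi : R -> Vec n) : 0 < tau -> PC tau psi ->
  exists B, forall s, vnorm (psi s) <= B.
Proof.
  intros Htau [Hout [Hrc [Hll _]]].
  assert (Hseg : forall t, -tau <= t <= 0 ->
            exists B, forall s, -tau <= s <= t -> vnorm (psi s) <= B).
  { apply real_induction; [lra | |  |].
    - exists (vnorm (psi (-tau))). intros s Hs. replace s with (-tau) by lra. lra.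
    - intros r Hr Hbelow. destruct (Hll r ltac:(lra)) as [L HL].
      destruct (HL 1 ltac:(lra)) as [d [Hd Hnear]].
      set (s0 := Rmax (-tau) (r - d / 2)).
      assert (-tau <= s0 /\ r - d / 2 <= s0) as [? ?] by (split; [apply Rmax_l | apply Rmax_r]).
      assert (s0 < r) by (unfold s0; apply Rmax_lub_lt; lra).
      destruct (Hbelow s0 ltac:(lra)) as [B HB].
      exists (Rmax B (Rmax (vnorm L + 1) (vnorm (psi r)))). intros s Hs.
      destruct (Rle_dec s s0); [eapply Rle_trans; [apply HB; lra | apply Rmax_l]|].
      eapply Rle_trans; [|apply Rmax_r].
      destruct (Req_dec s r) as [->|]; [apply Rmax_r|]. eapply Rle_trans; [|apply Rmax_l].
      specialize (Hnear s ltac:(lra)). pose proof (vnorm_le_vdist _ (psi s) L). lra.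
    - intros r Hr Hupto. destruct (Hupto r ltac:(lra)) as [B HB].
      destruct (Hrc r Hr 1 ltac:(lra)) as [d [Hd Hnear]].
      exists (Rmin d (- r)). split; [apply Rmin_pos; lra|]. intros t Ht.
      pose proof (Rmin_l d (- r)). pose proof (Rmin_r d (- r)).
      exists (Rmax B (vnorm (psi r) + 1)). intros s Hs.
      destruct (Rle_dec s r); [eapply Rle_trans; [apply HB; lra | apply Rmax_l]|].
      eapply Rle_trans; [|apply Rmax_r].
      specialize (Hnear s ltac:(lra) ltac:(lra)). pose proof (vnorm_le_vdist _ (psi s) (psi r)). lra. }
  destruct (Hseg 0 ltac:(lra)) as [B HB]. exists (Rmax B 0). intros s.
  destruct (classic (-tau <= s <= 0)).
  - eapply Rle_trans; [apply HB; lra | apply Rmax_l].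
  - rewrite Hout, vnorm_vzero by assumption. apply Rmax_r.
Qed.

Lemma supnorm_ge n tau (psi : R -> Vec n) : 0 < tau -> PC tau psi ->
  forall s, vnorm (psi s) <= supnorm tau psi.
Proof.
  intros Htau HPC. destruct (PC_bounded n tau psi Htau HPC) as [B HB].
  unfold supnorm. set (E := fun r => exists s, -tau <= s <= 0 /\ r = vnorm (psi s)).
  destruct (Lub_Rbar_correct E) as [Hub Hlub].
  assert (Hin : forall s, -tau <= s <= 0 -> Rbar_le (vnorm (psi s)) (Lub_Rbar E))
    by (intros s Hs; apply Hub; exists s; auto).
  assert (Hle : Rbar_le (Lub_Rbar E) B) by (apply Hlub; intros r [s [_ ->]]; apply HB).
  pose proof (Hin 0 ltac:(lra)) as Hin0.
  destruct (Lub_Rbar E) as [l| |]; simpl in *; try contradiction.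
  intros s. destruct (classic (-tau <= s <= 0)) as [Hs|Hs].
  - exact (Hin s Hs).
  - destruct HPC as [Hout _]. rewrite Hout, vnorm_vzero by assumption.
    pose proof (vnorm_nonneg _ (psi 0)). lra.
Qed.

Lemma supnorm_nonneg n tau (psi : R -> Vec n) : 0 < tau -> PC tau psi -> 0 <= supnorm tau psi.
Proof.
  intros Htau HPC. pose proof (supnorm_ge n tau psi Htau HPC 0). pose proof (vnorm_nonneg _ (psi 0)). lra.
Qed.

Lemma seg_in n tau (z : R -> Vec n) t s : -tau <= s <= 0 -> seg tau z t s = z (t + s).
Proof.
  intros Hs. unfold seg. destruct (Rle_dec (-tau) s); [|lra]. destruct (Rle_dec s 0); [reflexivity | lra].
Qed.

Lemma seg_at_0 n tau (z : R -> Vec n) t : 0 < tau -> seg tau z t 0 = z t.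
Proof. intros Htau. rewrite seg_in, Rplus_0_r by lra. reflexivity. Qed.

Lemma seg_ext n tau (z x : R -> Vec n) u :
  (forall r, u - tau <= r <= u -> z r = x r) -> seg tau z u = seg tau x u.
Proof.
  intros H. apply functional_extensionality; intro s. unfold seg.
  destruct (Rle_dec (-tau) s); [|reflexivity]. destruct (Rle_dec s 0); [apply H; lra | reflexivity].
Qed.

Lemma segm_in n tau (x : R -> Vec n) t L s : -tau <= s < 0 -> segm tau x t L s = x (t + s).
Proof.
  intros Hs. unfold segm. destruct (Rle_dec (-tau) s); [|lra].
  destruct (Rlt_dec s 0); [reflexivity | lra].
Qed.

Lemma segm_at_0 n tau (x : R -> Vec n) t L : 0 < tau -> segm tau x t L 0 = L.
Proof.
  intros Htau. unfold segm. destruct (Rle_dec (-tau) 0); [|lra]. destruct (Rlt_dec 0 0); [lra|].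
  destruct (Req_EM_T 0 0); [reflexivity | lra].
Qed.

Lemma PC_seg n tau (z : R -> Vec n) t : 0 < tau -> PRC vdist z -> PC tau (seg tau z t).
Proof.
  intros Htau [Hrc [Hll Hfin]]. split; [|split; [|split]].
  - intros s Hs. unfold seg. destruct (Rle_dec (-tau) s); [|reflexivity].
    destruct (Rle_dec s 0); [tauto | reflexivity].
  - intros s Hs eps He. destruct (Hrc (t + s) eps He) as [d [Hd H]]. exists d. split; [assumption|].
    intros u Hu Hu0. rewrite !seg_in by lra. apply H. lra.
  - intros s Hs. destruct (Hll (t + s)) as [L HL]. exists L.
    apply (has_llim_local _ _ (fun u => z (t + u)) _ s _ (s + tau)); [lra | |].
    + intros u Hu. apply seg_in. lra.
    + intros eps He. destruct (HL eps He) as [d [Hd H]]. exists d. split; [assumption|].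
      intros u Hu. apply H. lra.
  - destruct (Hfin (t - tau) t) as [l Hl]. exists (map (fun r => r - t) l).
    intros s Hs Hnot.
    assert (Hnl : ~ In (t + s) l)
      by (intros Hin; apply Hnot, in_map_iff; exists (t + s); split; [ring | exact Hin]).
    apply (cont_at_local _ _ (fun u => z (t + u)) _ s (Rmin (s + tau) (- s))); [apply Rmin_pos; lra | |].
    + intros u Hu. apply Rabs_def2 in Hu. pose proof (Rmin_l (s + tau) (- s)).
      pose proof (Rmin_r (s + tau) (- s)). apply seg_in. lra.
    + intros eps He. destruct (Hl (t + s) ltac:(lra) Hnl eps He) as [d [Hd H]].
      exists d. split; [assumption|]. intros u Hu. apply H.
      replace (t + u - (t + s)) with (u - s) by ring. exact Hu.
Qed.

Lemma length_filter_seq_all (p : nat -> bool) len : forall a,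
  (forall k, (a <= k < a + len)%nat -> p k = true) -> length (filter p (seq a len)) = len.
Proof.
  induction len as [|len IH]; intros a H; simpl; [reflexivity|].
  rewrite H by lia. simpl. f_equal. apply IH. intros k Hk. apply H. lia.
Qed.

Section ImpulseTimes.
Variables (tk : nat -> R) (t0 tau : R).
Hypotheses (Htk0 : tk 0%nat = t0) (Htkinc : forall k, tk k < tk (S k))
  (Htkunb : forall M, exists k, M < tk k).

Lemma tk_lt i j : (i < j)%nat -> tk i < tk j.
Proof. intros H. induction H; [apply Htkinc|]. specialize (Htkinc m). lra. Qed.

Lemma tk_le i j : (i <= j)%nat -> tk i <= tk j.
Proof. intros H. destruct (Nat.eq_dec i j) as [->|]; [lra|]. left. apply tk_lt. lia. Qed.

Lemma tk_ge_t0 k : t0 <= tk k.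
Proof. rewrite <- Htk0. apply tk_le. lia. Qed.

Lemma tk_eventually_gt q : exists K, forall k, (K <= k)%nat -> q < tk k.
Proof.
  destruct (Htkunb q) as [K HK]. exists K. intros k Hk. pose proof (tk_le K k Hk). lra.
Qed.

Lemma tk_index t : t0 <= t -> exists j, tk j <= t < tk (S j).
Proof.
  intros Ht. destruct (Htkunb t) as [K HK]. induction K as [|K IH]; [lra|].
  destruct (Rle_dec (tk K) t); [exists K; lra | apply IH; lra].
Qed.

Lemma tk_not_between j u k : tk j < u < tk (S j) -> tk k <> u.
Proof.
  intros Hu Hk. destruct (Nat.le_gt_cases k j) as [H|H].
  - pose proof (tk_le k j H). lra.
  - pose proof (tk_le (S j) k H). lra.
Qed.

Lemma IsN_exists t s : exists m, IsN tk t s m.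
Proof.
  destruct (tk_eventually_gt t) as [K HK]. eexists. exists K. split; [exact HK | reflexivity].
Qed.


Lemma IsN_ge_run t s m i J : IsN tk t s m -> (i < J)%nat ->
  (forall k, (i < k <= J)%nat -> s < tk k <= t) -> (J - i <= m)%nat.
Proof.
  intros [K [HK ->]] HiJ Hin.
  assert (HJK : (J < K)%nat).
  { destruct (Nat.lt_ge_cases J K) as [|HKJ]; [assumption|].
    specialize (HK J HKJ). specialize (Hin J ltac:(lia)). lra. }
  replace K with (i + ((J - i) + (K - J)))%nat by lia.
  rewrite seq_app, seq_app, !filter_app, !length_app.
  rewrite (length_filter_seq_all _ (J - i)); [lia|].
  intros k Hk. specialize (Hin k ltac:(lia)).
  destruct (Rlt_dec s (tk k)); [|lra]. destruct (Rle_dec (tk k) t); [reflexivity | lra].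
Qed.

Lemma IsN_from_t0 j u : tk j <= u < tk (S j) -> IsN tk u t0 j.
Proof.
  intros Hu. exists (S j). split.
  - intros k Hk. pose proof (tk_le (S j) k Hk). lra.
  - rewrite seq_S, filter_app, length_app, length_filter_seq_all.
    + simpl. destruct (Rlt_dec t0 (tk (S j))); simpl; [|lia].
      destruct (Rle_dec (tk (S j)) u); simpl; [lra | lia].
    + intros k Hk. pose proof (tk_le k j ltac:(lia)). pose proof (tk_lt 0 k ltac:(lia)).
      destruct (Rlt_dec t0 (tk k)); [|lra]. destruct (Rle_dec (tk k) u); [reflexivity | lra].
Qed.

Lemma window_count j i m : IsN tk (tk (S j)) (tk (S j) - tau) m -> (i <= j)%nat ->
  tk (S j) - tau < tk (S i) -> (j - i < m)%nat.
Proof.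
  intros Hm Hij Hwin. enough (S j - i <= m)%nat by lia.
  apply (IsN_ge_run _ _ _ i (S j) Hm); [lia|]. intros k Hk.
  pose proof (tk_le (S i) k ltac:(lia)). pose proof (tk_le k (S j) ltac:(lia)). lra.
Qed.

End ImpulseTimes.

Section Solution.
Variables (n : nat) (tau t0 : R) (tk : nat -> R) (f g : R -> (R -> Vec n) -> Vec n)
  (phi : R -> Vec n) (T : R) (x : R -> Vec n).
Hypotheses (Htau : 0 < tau) (Htk0 : tk 0%nat = t0) (Htkinc : forall k, tk k < tk (S k))
  (Htkunb : forall M, exists k, M < tk k) (HPC : PC tau phi)
  (Hsol : IsSolOn tau tk f g t0 phi T x).

Lemma sol_init u : t0 - tau <= u <= t0 -> x u = phi (u - t0).
Proof. intros Hu. destruct Hsol as [H _]. rewrite <- H by lra. f_equal. ring. Qed.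

Lemma sol_seg_t0 : seg tau x t0 = phi.
Proof.
  apply functional_extensionality; intro s. destruct HPC as [Hout _].
  destruct (classic (-tau <= s <= 0)).
  - rewrite seg_in, sol_init by lra. f_equal. ring.
  - unfold seg. rewrite Hout by assumption.
    destruct (Rle_dec (-tau) s); [destruct (Rle_dec s 0); [lra|]|]; reflexivity.
Qed.

Lemma sol_impulse_free_cont t : t0 < t < t0 + T -> (forall k, tk k <> t) -> cont_at vdist x t.
Proof. intros Ht Hk. destruct Hsol as [_ [_ [H _]]]. apply H; assumption. Qed.

Lemma sol_restart t : t0 <= t < t0 + T -> IsSolOn tau tk f g t (seg tau x t) (t0 + T - t) x.
Proof.
  intros Ht. destruct Hsol as [_ [Hrd [Hct Himp]]].
  replace (t + (t0 + T - t)) with (t0 + T) by ring. split; [|split; [|split]].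
  - intros s Hs. rewrite seg_in by lra. reflexivity.
  - intros t' Ht'. apply Hrd. lra.
  - intros t' Ht' Hk. apply Hct; [lra | exact Hk].
  - intros k Hk. apply Himp. lra.
Qed.

Lemma sol_rcont t : t0 - tau <= t < t0 + T -> rcont_at vdist x t.
Proof.
  intros Ht. destruct (Rlt_le_dec t t0).
  - destruct HPC as [_ [Hrc _]].
    apply (rcont_at_local _ _ (fun u => phi (u - t0)) _ t (t0 - t)); [lra | |].
    + intros u Hu. apply sol_init. lra.
    + intros eps He. destruct (Hrc (t - t0) ltac:(lra) eps He) as [d [Hd H]].
      exists (Rmin d (t0 - t)). split; [apply Rmin_pos; lra|]. intros u Hu.
      pose proof (Rmin_l d (t0 - t)). pose proof (Rmin_r d (t0 - t)). apply H; lra.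
  - destruct Hsol as [_ [Hrd _]]. eapply right_deriv_rcont, Hrd. lra.
Qed.

Lemma sol_llim t : t0 - tau < t < t0 + T -> exists L, has_llim vdist x t L.
Proof.
  intros Ht. destruct (Rle_lt_dec t t0).
  - destruct HPC as [_ [_ [Hll _]]]. destruct (Hll (t - t0) ltac:(lra)) as [L HL]. exists L.
    apply (has_llim_local _ _ (fun u => phi (u - t0)) _ t _ (t - (t0 - tau))); [lra | |].
    + intros u Hu. apply sol_init. lra.
    + intros eps He. destruct (HL eps He) as [d [Hd H]]. exists d. split; [assumption|].
      intros u Hu. apply H. lra.
  - destruct (classic (exists k, tk k = t)) as [[k <-]|Hnk].
    + destruct Hsol as [_ [_ [_ Himp]]]. destruct (Himp k ltac:(lra)) as [L [HL _]]. exists L. exact HL.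
    + exists (x t). apply has_llim_of_cont_at, sol_impulse_free_cont; [lra|].
      intros k Hk. apply Hnk. exists k. exact Hk.
Qed.

Lemma sol_cont_off_finite : exists l, forall t, t0 - tau < t < t0 + T -> ~ In t l -> cont_at vdist x t.
Proof.
  destruct HPC as [_ [_ [_ [lpsi Hlpsi]]]].
  destruct (tk_eventually_gt tk Htkinc Htkunb (t0 + T)) as [K HK].
  exists (t0 :: map (fun s => t0 + s) lpsi ++ map tk (seq 0 K)). intros t Ht Hnot.
  assert (Ht0 : t <> t0) by (intros ->; apply Hnot; left; reflexivity).
  destruct (Rlt_le_dec t t0).
  - assert (Hnl : ~ In (t - t0) lpsi).
    { intros Hin. apply Hnot. right. apply in_or_app. left. apply in_map_iff.
      exists (t - t0). split; [ring | exact Hin]. }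
    apply (cont_at_local _ _ (fun u => phi (u - t0)) _ t (Rmin (t - (t0 - tau)) (t0 - t)));
      [apply Rmin_pos; lra | |].
    + intros u Hu. apply Rabs_def2 in Hu. pose proof (Rmin_l (t - (t0 - tau)) (t0 - t)).
      pose proof (Rmin_r (t - (t0 - tau)) (t0 - t)). apply sol_init. lra.
    + intros eps He. destruct (Hlpsi (t - t0) ltac:(lra) Hnl eps He) as [d [Hd H]].
      exists d. split; [assumption|]. intros u Hu. apply H.
      replace (u - t0 - (t - t0)) with (u - t) by ring. exact Hu.
  - apply sol_impulse_free_cont; [lra|]. intros k Hk. destruct (Nat.lt_ge_cases k K) as [HkK|HkK].
    + apply Hnot. right. apply in_or_app. right. apply in_map_iff. exists k.
      split; [exact Hk | apply in_seq; lia].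
    + specialize (HK k HkK). lra.
Qed.

Lemma sol_clamp_PRC e L : t0 < e <= t0 + T -> has_llim vdist x e L ->
  PRC vdist (clamp x (t0 - tau) e L).
Proof.
  intros He HL. apply clamp_PRC; [lra | | | exact HL |].
  - intros t Ht. apply sol_rcont. lra.
  - intros t Ht. apply sol_llim. lra.
  - destruct sol_cont_off_finite as [l Hl]. exists l. intros t Ht. apply Hl. lra.
Qed.

Lemma seg_clamp e L s : t0 <= s < e -> seg tau (clamp x (t0 - tau) e L) s = seg tau x s.
Proof. intros Hs. apply seg_ext. intros r Hr. apply clamp_in. lra. Qed.

Lemma impulse_free_point_after s : t0 <= s < t0 + T ->
  exists e, s < e < t0 + T /\ forall k, tk k <> e.
Proof.
  intros Hs. destruct (tk_index tk t0 Htk0 Htkunb s ltac:(lra)) as [j Hj].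
  set (m := Rmin (tk (S j)) (t0 + T)).
  assert (m <= tk (S j) /\ m <= t0 + T /\ s < m) as (? & ? & ?)
    by (unfold m; repeat split; [apply Rmin_l | apply Rmin_r | apply Rmin_glb_lt; lra]).
  exists ((s + m) / 2). split; [lra|]. intros k. apply (tk_not_between tk Htkinc j). lra.
Qed.

Lemma sol_extension s : t0 <= s < t0 + T ->
  exists z, PRC vdist z /\ exists e, s < e < t0 + T /\ forall u, t0 - tau <= u < e -> z u = x u.
Proof.
  intros Hs. destruct (impulse_free_point_after s Hs) as [e [He Hk]].
  exists (clamp x (t0 - tau) e (x e)). split.
  - apply sol_clamp_PRC; [lra|]. apply has_llim_of_cont_at, sol_impulse_free_cont; [lra | exact Hk].
  - exists e. split; [lra|]. intros u Hu. apply clamp_in. lra.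
Qed.

Lemma sol_seg_PC s : t0 <= s < t0 + T -> PC tau (seg tau x s).
Proof.
  intros Hs. destruct (sol_extension s Hs) as [z [Hz [e [He Hze]]]].
  rewrite <- (seg_ext n tau z x s) by (intros r Hr; apply Hze; lra). apply PC_seg; assumption.
Qed.

End Solution.

Lemma Kinf_le (a : R -> R) y y' : Kinf a -> 0 <= y <= y' -> a y <= a y'.
Proof.
  intros [_ [_ [Hmono _]]] Hy. destruct (Req_dec y y') as [->|]; [lra|]. left. apply Hmono; lra.
Qed.

Lemma Kinf_nonneg (a : R -> R) y : Kinf a -> 0 <= y -> 0 <= a y.
Proof. intros Ha Hy. pose proof (Kinf_le a 0 y Ha ltac:(lra)). destruct Ha as [H0 _]. lra. Qed.

Lemma Kinf_pos (a : R -> R) y : Kinf a -> 0 < y -> 0 < a y.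
Proof. intros [H0 [_ [Hmono _]]] Hy. rewrite <- H0. apply Hmono; lra. Qed.

Lemma Kinf_lt_inv (a : R -> R) y y' : Kinf a -> 0 <= y -> 0 <= y' -> a y < a y' -> y < y'.
Proof.
  intros Ha Hy Hy' Hlt. apply Rnot_le_lt. intros Hle. pose proof (Kinf_le a y' y Ha ltac:(lra)). lra.
Qed.

Lemma Kinf_small (a : R -> R) q : Kinf a -> 0 < q -> exists d, 0 < d /\ forall y, 0 <= y < d -> a y < q.
Proof.
  intros [H0 [Hcont _]] Hq. destruct (Hcont 0 ltac:(lra) q Hq) as [d [Hd H]].
  exists d. split; [assumption|]. intros y Hy.
  specialize (H y ltac:(lra) ltac:(rewrite Rminus_0_r, Rabs_right; lra)).
  rewrite H0, Rminus_0_r in H. apply Rabs_def2 in H. lra.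
Qed.

Lemma exp_decay_below R0 q rate t0 : 0 < q -> 0 < rate ->
  exists T0, forall t, T0 <= t -> R0 * exp (- rate * (t - t0)) < q.
Proof.
  intros Hq Hrate. exists (t0 + (Rabs (ln (Rabs R0 + 1) - ln q) + 1) / rate). intros t Ht.
  assert (Hdiv : (Rabs (ln (Rabs R0 + 1) - ln q) + 1) / rate * rate = Rabs (ln (Rabs R0 + 1) - ln q) + 1)
    by (field; lra).
  assert (Hlong : Rabs (ln (Rabs R0 + 1) - ln q) + 1 <= rate * (t - t0)).
  { rewrite <- Hdiv, Rmult_comm. apply Rmult_le_compat_l; lra. }
  pose proof (Rle_abs (ln (Rabs R0 + 1) - ln q)) as Habs. pose proof (Rabs_pos R0).
  apply Rle_lt_trans with ((Rabs R0 + 1) * exp (- rate * (t - t0))).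
  - pose proof (Rle_abs R0). pose proof (exp_pos (- rate * (t - t0))). nra.
  - rewrite <- (exp_ln (Rabs R0 + 1)) by lra. rewrite <- (exp_ln q) by lra.
    rewrite <- exp_plus. apply exp_increasing. lra.
Qed.

Lemma exp_le_exp a b : a <= b -> exp a <= exp b.
Proof. intros H. destruct (Req_dec a b) as [->|]; [lra|]. left. apply exp_increasing. lra. Qed.

Lemma ln_nonneg y : 1 <= y -> 0 <= ln y.
Proof.
  intros Hy. rewrite <- ln_1. destruct (Req_dec y 1) as [->|]; [lra|]. left. apply ln_increasing; lra.
Qed.

Lemma le_exp_opp y s : y * exp s <= 1 -> y <= exp (- s).
Proof.
  intros H. rewrite exp_Ropp. pose proof (exp_pos s).
  apply Rmult_le_reg_r with (exp s); [lra|]. rewrite Rinv_l by lra. exact H.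
Qed.

(** * The impulse gain *)

Definition sigma_choice (tau : R) (tk : nat -> R) (c rho1 rho2 kap sigma : R) : Prop :=
  (0 < c /\ 1 <= rho1 /\ sigma = - ln (rho1 + rho2 * exp (c * tau))) \/
  (0 < c /\ rho1 < 1 /\
     1 <= rho1 + ((1 - rho1) * kap + rho2) * exp (c * tau) /\
     sigma = - ln (rho1 + ((1 - rho1) * kap + rho2) * exp (c * tau))) \/
  (0 < c /\ rho1 < 1 /\
     rho1 + ((1 - rho1) * kap + rho2) * exp (c * tau) < 1 /\
     0 < sigma /\
     forall k m, IsN tk (tk k) (tk k - tau) m ->
       rho1 * exp sigma + ((1 - rho1) * kap + rho2) * exp (c * tau)
         * exp (sigma * INR m) <= 1) \/
  (c <= 0 /\ rho1 < 1 /\ rho1 + (1 - rho1) * kap + rho2 < 1 /\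
     0 < sigma /\
     forall k m, IsN tk (tk k) (tk k - tau) m ->
       rho1 * exp sigma + ((1 - rho1) * kap + rho2)
         * exp (sigma * INR m) <= 1).

(* An impulse multiplies the Lyapunov bound by at most [exp (- sigma)] when the history
   over the delay window is at most [exp ph] times the bound just before the impulse. *)
Definition jump_gain_le (rho1 rho2 kap sigma ph : R) : Prop :=
  (1 <= rho1 /\ rho1 + rho2 * exp ph <= exp (- sigma)) \/
  (rho1 < 1 /\ rho1 + ((1 - rho1) * kap + rho2) * exp ph <= exp (- sigma)).

Lemma jump_estimate rho1 rho2 kap sigma ph v1m v1p v2 M B :
  0 <= rho1 -> 0 <= rho2 -> 0 <= kap -> jump_gain_le rho1 rho2 kap sigma ph ->
  0 <= v1m -> 0 <= v2 -> v1m + v2 <= B -> M <= exp ph * B ->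
  v1p <= rho1 * v1m + rho2 * M -> v2 <= kap * M -> v1p + v2 <= exp (- sigma) * B.
Proof.
  intros Hr1 Hr2 Hkap Hgain Hv1m Hv2 HB HM Hv1p Hv2M.
  assert (Hrho2M : rho2 * M <= rho2 * (exp ph * B)) by (apply Rmult_le_compat_l; lra).
  destruct Hgain as [[H1 Hle]|[H1 Hle]].
  - assert (rho1 * v1m + v2 <= rho1 * B) by nra. nra.
  - assert (Hmix : rho1 * v1m + v2 <= rho1 * B + (1 - rho1) * kap * M) by nra.
    assert (((1 - rho1) * kap + rho2) * M <= ((1 - rho1) * kap + rho2) * (exp ph * B))
      by (apply Rmult_le_compat_l; nra).
    nra.
Qed.



(* [d] counts the impulses between a time of the delay window and the current impulse and [dt] is
   the time elapsed in between; [ph] bounds the resulting log-ratio of bounds ([Vbound_window]). *)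
Lemma window_exponent tau tk c c' rho1 rho2 kap sigma k m : 0 <= rho2 -> c' <= c ->
  sigma_choice tau tk c rho1 rho2 kap sigma -> IsN tk (tk k) (tk k - tau) m -> (1 <= m)%nat ->
  exists ph, jump_gain_le rho1 rho2 kap sigma ph /\
    forall d dt, (d < m)%nat -> 0 <= dt <= tau -> sigma * INR d + c' * dt <= ph.
Proof.
  intros Hr2 Hc' Hcases Hm Hm1.
  assert (Hdt : forall dt, 0 <= dt <= tau -> 0 < c -> c' * dt <= c * tau).
  { intros dt Hdt Hc. assert (0 <= (c - c') * dt) by (apply Rmult_le_pos; lra).
    assert (0 <= c * (tau - dt)) by (apply Rmult_le_pos; lra). nra. }
  assert (Hd : forall d, (d < m)%nat -> 0 <= INR d <= INR m - 1).
  { intros d Hdm. split; [apply pos_INR|]. apply le_INR in Hdm. rewrite S_INR in Hdm. lra. }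
  assert (Hshift : forall y, exp (y + sigma * (INR m - 1)) * exp sigma = exp y * exp (sigma * INR m)).
  { intros y. rewrite <- !exp_plus. f_equal. ring. }
  destruct Hcases
    as [(Hc & H1 & Hs)|[(Hc & H1 & H2 & Hs)|[(Hc & H1 & H2 & Hs & Hk)|(Hc & H1 & H2 & Hs & Hk)]]].
  - assert (HA : 1 <= rho1 + rho2 * exp (c * tau)) by (pose proof (exp_pos (c * tau)); nra).
    pose proof (ln_nonneg _ HA). exists (c * tau). split.
    + left. rewrite Hs, Ropp_involutive, exp_ln by lra. lra.
    + intros d dt Hdm Hdt'. specialize (Hd d Hdm). specialize (Hdt dt Hdt' Hc). rewrite Hs. nra.
  - pose proof (ln_nonneg _ H2). exists (c * tau). split.
    + right. rewrite Hs, Ropp_involutive, exp_ln by lra. lra.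
    + intros d dt Hdm Hdt'. specialize (Hd d Hdm). specialize (Hdt dt Hdt' Hc). rewrite Hs. nra.
  - specialize (Hk k m Hm). exists (c * tau + sigma * (INR m - 1)). split.
    + right. split; [assumption|]. apply le_exp_opp.
      rewrite Rmult_plus_distr_r, Rmult_assoc, Hshift. lra.
    + intros d dt Hdm Hdt'. specialize (Hd d Hdm). specialize (Hdt dt Hdt' Hc). nra.
  - specialize (Hk k m Hm). exists (0 + sigma * (INR m - 1)). split.
    + right. split; [assumption|]. apply le_exp_opp.
      rewrite Rmult_plus_distr_r, Rmult_assoc, Hshift, exp_0, Rmult_1_l. lra.
    + intros d dt Hdm Hdt'. specialize (Hd d Hdm).
      assert (0 <= - c' * dt) by (apply Rmult_le_pos; lra). nra.
Qed.

(** * The Lyapunov estimate *)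

Section Lyapunov.
Variables (n : nat) (tau t0 : R) (tk : nat -> R) (f g : R -> (R -> Vec n) -> Vec n)
  (V1 : R -> Vec n -> R) (V2 : R -> (R -> Vec n) -> R)
  (a1 a2 a3 : R -> R) (c rho1 rho2 mu lam kap sigma : R).
Hypotheses (Htau : 0 < tau) (Ht0 : 0 <= t0) (Htk0 : tk 0%nat = t0)
  (Htkinc : forall k, tk k < tk (S k)) (Htkunb : forall M, exists k, M < tk k)
  (HV1 : V0 V1) (HV2 : V0star tau V2) (Ha1 : Kinf a1) (Ha2 : Kinf a2) (Ha3 : Kinf a3)
  (Hr1 : 0 <= rho1) (Hr2 : 0 <= rho2) (Hmu : 0 <= mu) (Hlam : 0 < lam) (Hkap : 0 < kap).
Hypotheses
  (Hi1 : forall t (y : Vec n), a1 (vnorm y) <= V1 t y <= a2 (vnorm y))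
  (Hi2 : forall t psi, 0 <= t -> PC tau psi -> 0 <= V2 t psi <= a3 (supnorm tau psi))
  (Hii : forall t psi, 0 <= t -> PC tau psi ->
   forall T x, 0 < T -> IsSolOn tau tk f g t psi T x ->
   forall eps, 0 < eps -> exists del, 0 < del /\
     forall h, 0 < h < del -> h < T ->
       (V1 (t + h) (x (t + h)) + V2 (t + h) (seg tau x (t + h))
        - (V1 t (psi 0) + V2 t psi)) / h
       <= - c * (V1 t (psi 0) + V2 t psi) + eps)
  (Hiii : forall t psi, 0 <= t -> PC tau psi ->
   forall L : R -> R,
     (forall s, -tau <= s <= 0 ->
        has_llim rdist (fun u => V1 u (psi s)) (t + s) (L s)) ->
   forall M, (forall s, -tau <= s <= 0 -> L s <= M) ->
     V1 t (vadd (psi 0) (g t psi)) <= rho1 * L 0 + rho2 * M)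
  (Hiv : forall t psi, 0 <= t -> PC tau psi ->
   forall M, (forall s, -tau <= s <= 0 -> V1 (t + s) (psi s) <= M) ->
     V2 t psi <= kap * M)
  (Hsigma : sigma_choice tau tk c rho1 rho2 kap sigma)
  (Hv : forall t s m, t0 <= s < t -> IsN tk t s m ->
     - sigma * INR m - (c - lam) * (t - s) <= mu).

Definition Vtraj (z : R -> Vec n) (u : R) : R := V1 u (z u) + V2 u (seg tau z u).

Lemma V1_traj_leftcont (z : R -> Vec n) t : PRC vdist z -> cont_at vdist z t ->
  leftcont (fun u => V1 u (z u)) t.
Proof. intros Hz Hzt. destruct HV1 as [_ HV]. apply leftcont_of_cont_at, (proj2 (HV z Hz)), Hzt. Qed.

Lemma V2_traj_leftcont (z : R -> Vec n) t : PRC vdist z -> 0 < t ->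
  leftcont (fun u => V2 u (seg tau z u)) t.
Proof.
  intros Hz Ht. destruct HV2 as [_ [HV _]]. intros eps He.
  destruct (HV z Hz t ltac:(lra) eps He) as [d [Hd H]].
  exists (Rmin d t). split; [apply Rmin_pos; lra|]. intros u Hu.
  pose proof (Rmin_l d t). pose proof (Rmin_r d t). apply H; [lra | apply Rabs_def1; lra].
Qed.

Lemma Vtraj_leftcont (z : R -> Vec n) t : PRC vdist z -> cont_at vdist z t -> 0 < t ->
  leftcont (Vtraj z) t.
Proof.
  intros Hz Hzt Ht. apply leftcont_plus; [apply V1_traj_leftcont | apply V2_traj_leftcont]; assumption.
Qed.

Lemma V1_llim_const (y : Vec n) t : has_llim rdist (fun u => V1 u y) t (V1 t y).
Proof.
  destruct HV1 as [_ HV]. apply (has_llim_of_cont_at _ _ (fun u => V1 u y)).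
  apply (proj2 (HV (fun _ => y) (PRC_const n y)) t (cont_at_const n y t)).
Qed.

Let rate := c - lam / 2.

(* The bound on [[t_j, t_{j+1})]: half of the margin [lam] is spent in the comparison
   lemma, the other half is the final decay rate. *)
Definition Vbound (M0 : R) (j : nat) (u : R) : R := M0 * exp (- sigma * INR j - rate * (u - t0)).

Lemma Vbound_pos M0 j u : 0 < M0 -> 0 < Vbound M0 j u.
Proof. intros HM0. unfold Vbound. pose proof (exp_pos (- sigma * INR j - rate * (u - t0))). nra. Qed.

Lemma Vbound_shift M0 j a u : Vbound M0 j a * exp (- rate * (u - a)) = Vbound M0 j u.
Proof. unfold Vbound. rewrite Rmult_assoc, <- exp_plus. do 2 f_equal. ring. Qed.

Lemma Vbound_succ M0 j u : Vbound M0 (S j) u = exp (- sigma) * Vbound M0 j u.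
Proof.
  unfold Vbound. rewrite S_INR.
  replace (- sigma * (INR j + 1) - rate * (u - t0)) with (- sigma + (- sigma * INR j - rate * (u - t0)))
    by ring.
  rewrite exp_plus. ring.
Qed.

Lemma Vbound_at_t0 M0 : Vbound M0 0 t0 = M0.
Proof. unfold Vbound. simpl. rewrite Rminus_diag. replace (- sigma * 0 - rate * 0) with 0 by ring.
  rewrite exp_0. ring. Qed.

Lemma Vbound_window M0 i j r u m ph : 0 < M0 -> (i <= j)%nat -> (j - i < m)%nat -> 0 <= u - r <= tau ->
  (forall d dt, (d < m)%nat -> 0 <= dt <= tau -> sigma * INR d + rate * dt <= ph) ->
  Vbound M0 i r <= exp ph * Vbound M0 j u.
Proof.
  intros HM0 Hij Hm Hdt Hph. specialize (Hph (j - i)%nat (u - r) Hm Hdt).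
  rewrite minus_INR in Hph by assumption.
  unfold Vbound. rewrite (Rmult_comm (exp ph)), Rmult_assoc, <- exp_plus.
  apply Rmult_le_compat_l; [lra|]. apply exp_le_exp. lra.
Qed.

Section Trajectory.
Variables (phi : R -> Vec n) (T : R) (x : R -> Vec n) (eps0 : R).
Hypotheses (HPC : PC tau phi) (Hsol : IsSolOn tau tk f g t0 phi T x) (Heps0 : 0 < eps0).

(* [eps0 > 0] keeps the bound positive, as the comparison lemma requires. *)
Let M0 := a2 (supnorm tau phi) + a3 (supnorm tau phi) + eps0.

Lemma M0_pos : 0 < M0.
Proof.
  pose proof (supnorm_nonneg n tau phi Htau HPC).
  pose proof (Kinf_nonneg a2 _ Ha2 H). pose proof (Kinf_nonneg a3 _ Ha3 H). unfold M0. lra.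
Qed.

Lemma V1_initial_le_M0 t u : V1 t (phi u) <= M0.
Proof.
  pose proof (Hi1 t (phi u)) as [_ Hle]. pose proof (supnorm_ge n tau phi Htau HPC u) as Hsup.
  pose proof (Kinf_le a2 _ _ Ha2 (conj (vnorm_nonneg _ (phi u)) Hsup)).
  pose proof (Kinf_nonneg a3 _ Ha3 (supnorm_nonneg n tau phi Htau HPC)). unfold M0. lra.
Qed.

Lemma V2_sol_nonneg u : t0 <= u < t0 + T -> 0 <= V2 u (seg tau x u).
Proof. intros Hu. apply Hi2; [lra | apply (sol_seg_PC n tau t0 tk f g phi T x); assumption]. Qed.

Lemma Vtraj_sol_t0 : Vtraj x t0 <= M0.
Proof.
  unfold Vtraj. rewrite (sol_seg_t0 n tau t0 tk f g phi T x HPC Hsol).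
  rewrite (sol_init n tau t0 tk f g phi T x Hsol t0) by lra. rewrite Rminus_diag.
  pose proof (Hi1 t0 (phi 0)) as [_ Hle]. pose proof (supnorm_ge n tau phi Htau HPC 0) as Hsup.
  pose proof (Kinf_le a2 _ _ Ha2 (conj (vnorm_nonneg _ (phi 0)) Hsup)).
  pose proof (Hi2 t0 phi Ht0 HPC) as [_ HV2le]. unfold M0. lra.
Qed.

Lemma Vtraj_sol_dini t : t0 <= t < t0 + T -> upper_dini_le (Vtraj x) c (t0 + T) t.
Proof.
  intros Ht eps He.
  pose proof (sol_seg_PC n tau t0 tk f g phi T x Htau Htk0 Htkinc Htkunb HPC Hsol t Ht) as HPCt.
  destruct (Hii t (seg tau x t) ltac:(lra) HPCt (t0 + T - t) x ltac:(lra)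
    (sol_restart n tau t0 tk f g phi T x Hsol t Ht) eps He) as [d [Hd H]].
  exists d. split; [assumption|]. intros h Hh Hh2. specialize (H h Hh Hh2).
  rewrite seg_at_0 in H by assumption. exact H.
Qed.

Lemma Vtraj_sol_leftcont t : t0 < t < t0 + T -> (forall k, tk k <> t) -> leftcont (Vtraj x) t.
Proof.
  intros Ht Hk.
  destruct (sol_extension n tau t0 tk f g phi T x Htau Htk0 Htkinc Htkunb HPC Hsol t ltac:(lra))
    as [z [Hz [e [He Hze]]]].
  assert (Hagree : forall u, t0 <= u < e -> Vtraj z u = Vtraj x u).
  { intros u Hu. unfold Vtraj. rewrite Hze by lra.
    rewrite (seg_ext n tau z x u) by (intros r Hr; apply Hze; lra). reflexivity. }
  apply (leftcont_ext (Vtraj z) _ t (t - t0)); [lra | | intros u Hu; symmetry; apply Hagree; lra].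
  apply Vtraj_leftcont; [exact Hz | | lra].
  apply (cont_at_local _ _ x _ t (Rmin (t - (t0 - tau)) (e - t))); [apply Rmin_pos; lra | |].
  - intros u Hu. apply Rabs_def2 in Hu. pose proof (Rmin_l (t - (t0 - tau)) (e - t)).
    pose proof (Rmin_r (t - (t0 - tau)) (e - t)). apply Hze. lra.
  - apply (sol_impulse_free_cont n tau t0 tk f g phi T x Hsol); assumption.
Qed.

Definition Vtraj_sol_bounded_until (j : nat) : Prop :=
  forall i, (i <= j)%nat -> forall u, tk i <= u < tk (S i) -> u < t0 + T -> Vtraj x u <= Vbound M0 i u.

Lemma Vtraj_sol_between j : (tk j < t0 + T -> Vtraj x (tk j) <= Vbound M0 j (tk j)) ->
  forall u, tk j <= u < tk (S j) -> u < t0 + T -> Vtraj x u <= Vbound M0 j u.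
Proof.
  intros Hinit u Hu HuT. pose proof (tk_ge_t0 tk t0 Htk0 Htkinc j).
  rewrite <- (Vbound_shift M0 j (tk j) u).
  apply (upper_dini_comparison (Vtraj x) (tk j) u c rate); [lra | | | | | | lra].
  - unfold rate. lra.
  - apply Vbound_pos, M0_pos.
  - apply Hinit. lra.
  - intros t Ht. apply Vtraj_sol_leftcont; [lra|]. intros k. apply (tk_not_between tk Htkinc j). lra.
  - intros t Ht. apply (upper_dini_le_restrict (Vtraj x) _ c u (t0 + T)); [lra | reflexivity |].
    apply Vtraj_sol_dini. lra.
Qed.

(* Comparison on [[t_j, t_{j+1}]] for the solution completed by its left limit at [t_{j+1}]. *)
Lemma left_state_le j L : tk (S j) < t0 + T -> has_llim vdist x (tk (S j)) L ->
  Vtraj x (tk j) <= Vbound M0 j (tk j) ->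
  V1 (tk (S j)) L + V2 (tk (S j)) (segm tau x (tk (S j)) L) <= Vbound M0 j (tk (S j)).
Proof.
  intros HJT HL Hinit. pose proof (tk_ge_t0 tk t0 Htk0 Htkinc j). pose proof (Htkinc j).
  set (tJ := tk (S j)) in *.
  set (z := clamp x (t0 - tau) tJ L).
  assert (Hz : PRC vdist z) by (apply (sol_clamp_PRC n tau t0 tk f g phi T x); auto; lra).
  assert (Hagree : forall u, t0 <= u < tJ -> Vtraj z u = Vtraj x u).
  { intros u Hu. unfold Vtraj, z. rewrite clamp_in by lra.
    rewrite (seg_clamp n tau t0 x) by lra. reflexivity. }
  assert (HzJ : Vtraj z tJ = V1 tJ L + V2 tJ (segm tau x tJ L)).
  { unfold Vtraj, z. rewrite clamp_after, seg_clamp_end by lra. reflexivity. }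
  rewrite <- HzJ, <- (Vbound_shift M0 j (tk j) tJ).
  apply (upper_dini_comparison (Vtraj z) (tk j) tJ c rate); [lra | unfold rate; lra | | | | | lra].
  - apply Vbound_pos, M0_pos.
  - rewrite Hagree by lra. exact Hinit.
  - intros t Ht. destruct (Req_dec t tJ) as [->|Hne].
    + apply Vtraj_leftcont; [exact Hz | apply clamp_cont_at_end; [lra | exact HL] | lra].
    + apply (leftcont_ext (Vtraj x) _ t (t - t0)); [lra | | intros u Hu; apply Hagree; lra].
      apply Vtraj_sol_leftcont; [lra|]. intros k. apply (tk_not_between tk Htkinc j). fold tJ. lra.
  - intros t Ht. apply (upper_dini_le_restrict (Vtraj x) _ c tJ (t0 + T));
      [lra | intros u Hu; apply Hagree; lra |].
    apply Vtraj_sol_dini. lra.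
Qed.

(* Both values are the left limit of [V2 u x_u], by continuity of [V2] along the PRC extensions
   [z'] (beyond [t]) and [z] (by [x(t^-)]) of the solution. *)
Lemma V2_sol_at_impulse j L : tk (S j) < t0 + T -> has_llim vdist x (tk (S j)) L ->
  V2 (tk (S j)) (seg tau x (tk (S j))) = V2 (tk (S j)) (segm tau x (tk (S j)) L).
Proof.
  intros HJT HL. assert (HtJ : t0 < tk (S j)) by (rewrite <- Htk0; apply (tk_lt tk Htkinc); lia).
  set (tJ := tk (S j)) in *.
  set (z := clamp x (t0 - tau) tJ L).
  assert (Hz : PRC vdist z) by (apply (sol_clamp_PRC n tau t0 tk f g phi T x); auto; lra).
  destruct (sol_extension n tau t0 tk f g phi T x Htau Htk0 Htkinc Htkunb HPC Hsol tJ ltac:(lra))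
    as [z' [Hz' [e [He Hz'x]]]].
  assert (Hz'seg : forall u, t0 <= u <= tJ -> seg tau z' u = seg tau x u)
    by (intros u Hu; apply seg_ext; intros r Hr; apply Hz'x; lra).
  assert (Hzseg : seg tau z tJ = segm tau x tJ L) by (apply seg_clamp_end; lra).
  rewrite <- Hz'seg, <- Hzseg by lra.
  apply (leftcont_eq (fun u => V2 u (seg tau z' u)) (fun u => V2 u (seg tau z u)) tJ (tJ - t0));
    [lra | apply V2_traj_leftcont; [exact Hz' | lra] | apply V2_traj_leftcont; [exact Hz | lra] |].
  intros u Hu. unfold z. rewrite Hz'seg, (seg_clamp n tau t0 x) by lra. reflexivity.
Qed.

Lemma history_le j L m ph : tk (S j) < t0 + T ->
  Vtraj_sol_bounded_until j ->
  V1 (tk (S j)) L <= Vbound M0 j (tk (S j)) ->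
  IsN tk (tk (S j)) (tk (S j) - tau) m ->
  (forall d dt, (d < m)%nat -> 0 <= dt <= tau -> sigma * INR d + rate * dt <= ph) ->
  forall s, -tau <= s <= 0 ->
    V1 (tk (S j) + s) (segm tau x (tk (S j)) L s) <= exp ph * Vbound M0 j (tk (S j)).
Proof.
  intros HJT Hbefore HL Hm Hph s Hs.
  pose proof M0_pos as HM0. pose proof (tk_ge_t0 tk t0 Htk0 Htkinc (S j)) as HtJ.
  set (tJ := tk (S j)) in *.
  destruct (Req_dec s 0) as [->|Hs0].
  - assert (Hm1 : (0 < m)%nat)
      by (pose proof (window_count tk tau Htkinc j j m Hm (le_n j) ltac:(lra)); lia).
    assert (0 <= ph) by (specialize (Hph 0%nat 0 Hm1 ltac:(lra)); simpl in Hph; lra).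
    rewrite Rplus_0_r, segm_at_0 by exact Htau. pose proof (exp_ineq1_le ph).
    pose proof (Vbound_pos M0 j tJ HM0). nra.
  - rewrite segm_in by lra. destruct (Rle_lt_dec t0 (tJ + s)) as [Hr|Hr].
    + destruct (tk_index tk t0 Htk0 Htkunb (tJ + s) Hr) as [i Hi].
      assert (Hij : (i <= j)%nat).
      { destruct (Nat.le_gt_cases i j) as [|Hji]; [assumption|].
        pose proof (tk_le tk Htkinc (S j) i Hji) as Hle. fold tJ in Hle. lra. }
      apply Rle_trans with (Vbound M0 i (tJ + s)).
      * pose proof (Hbefore i Hij (tJ + s) Hi ltac:(lra)). pose proof (V2_sol_nonneg (tJ + s) ltac:(lra)).
        unfold Vtraj in *. lra.
      * apply (Vbound_window M0 i j (tJ + s) tJ m ph); [exact HM0 | exact Hij | | lra | exact Hph].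
        apply (window_count tk tau Htkinc); [exact Hm | exact Hij | fold tJ; lra].
    + rewrite (sol_init n tau t0 tk f g phi T x Hsol) by lra.
      apply Rle_trans with (Vbound M0 0 t0); [rewrite Vbound_at_t0; apply V1_initial_le_M0|].
      apply (Vbound_window M0 0 j t0 tJ m ph); [exact HM0 | lia | | lra | exact Hph].
      apply (window_count tk tau Htkinc); [exact Hm | lia |].
      pose proof (Htkinc 0%nat). rewrite Htk0 in *. fold tJ. lra.
Qed.

Lemma Vtraj_sol_at_impulse j :
  Vtraj_sol_bounded_until j ->
  Vtraj x (tk j) <= Vbound M0 j (tk j) -> tk (S j) < t0 + T ->
  Vtraj x (tk (S j)) <= Vbound M0 (S j) (tk (S j)).
Proof.
  intros Hbefore Hinit HJT. pose proof (tk_ge_t0 tk t0 Htk0 Htkinc (S j)) as HtJ.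
  pose proof (tk_ge_t0 tk t0 Htk0 Htkinc j). pose proof (Htkinc j).
  destruct Hsol as [_ [_ [_ Himp]]].
  destruct (Himp (S j) ltac:(lra)) as [L [HL Hjump]].
  pose proof (left_state_le j L HJT HL Hinit) as Hleft.
  pose proof (V2_sol_at_impulse j L HJT HL) as HV2eq.
  set (tJ := tk (S j)) in *. set (psi := segm tau x tJ L) in *.
  destruct (IsN_exists tk Htkinc Htkunb tJ (tJ - tau)) as [m Hm].
  assert (Hm1 : (1 <= m)%nat)
    by (pose proof (window_count tk tau Htkinc j j m Hm (le_n j) ltac:(lra)); lia).
  destruct (window_exponent tau tk c rate rho1 rho2 kap sigma (S j) m Hr2 ltac:(unfold rate; lra)
    Hsigma Hm Hm1) as [ph [Hgain Hph]].
  assert (HPCpsi : PC tau psi).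
  { unfold psi. rewrite <- (seg_clamp_end n x (t0 - tau) tJ L) by lra.
    apply PC_seg; [exact Htau|]. apply (sol_clamp_PRC n tau t0 tk f g phi T x); auto; lra. }
  assert (Hpsi0 : psi 0 = L) by (apply segm_at_0; exact Htau).
  pose proof (Hi2 tJ psi ltac:(lra) HPCpsi) as [HV2nn _].
  pose proof (proj1 HV1 tJ L) as HV1nn.
  assert (HL1 : V1 tJ L <= Vbound M0 j tJ) by lra.
  assert (Hhist := history_le j L m ph HJT Hbefore HL1 Hm Hph).
  pose proof (Hiii tJ psi ltac:(lra) HPCpsi (fun s => V1 (tJ + s) (psi s))
    (fun s _ => V1_llim_const (psi s) (tJ + s)) _ Hhist) as Hv1p.
  pose proof (Hiv tJ psi ltac:(lra) HPCpsi _ Hhist) as Hv2.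
  cbv beta in Hv1p. rewrite Rplus_0_r, Hpsi0 in Hv1p.
  rewrite Vbound_succ. unfold Vtraj. rewrite HV2eq, Hjump.
  apply (jump_estimate rho1 rho2 kap sigma ph (V1 tJ L) _ _ (exp ph * Vbound M0 j tJ));
    [lra | lra | lra | exact Hgain | exact HV1nn | exact HV2nn | exact Hleft | lra | exact Hv1p
    | exact Hv2].
Qed.

Lemma Vtraj_sol_at_tk j : tk j < t0 + T -> Vtraj x (tk j) <= Vbound M0 j (tk j).
Proof.
  induction j as [j IH] using (well_founded_induction Nat.lt_wf_0). destruct j as [|j]; intros HjT.
  - rewrite Htk0, Vbound_at_t0. apply Vtraj_sol_t0.
  - pose proof (Htkinc j).
    apply Vtraj_sol_at_impulse; [| apply IH; [lia | lra] | exact HjT].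
    intros i Hij. apply Vtraj_sol_between. intros. apply IH; [lia | assumption].
Qed.

Lemma sol_estimate u : t0 <= u < t0 + T ->
  a1 (vnorm (x u)) <= M0 * exp mu * exp (- (lam / 2) * (u - t0)).
Proof.
  intros Hu. destruct (tk_index tk t0 Htk0 Htkunb u ltac:(lra)) as [j Hj].
  pose proof (Vtraj_sol_between j (Vtraj_sol_at_tk j) u Hj ltac:(lra)) as Hbound.
  pose proof (Hi1 u (x u)) as [Ha1V _]. pose proof (V2_sol_nonneg u Hu).
  assert (Hexp : - sigma * INR j - (c - lam) * (u - t0) <= mu).
  { destruct (Req_dec u t0) as [->|Hne].
    - destruct j as [|j]; [simpl; lra|].
      pose proof (tk_lt tk Htkinc 0 (S j) ltac:(lia)). lra.
    - apply (Hv u t0 j); [lra | apply (IsN_from_t0 tk t0 Htk0 Htkinc); exact Hj]. }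
  unfold Vtraj, Vbound, rate in *. rewrite Rmult_assoc, <- exp_plus.
  apply Rle_trans with (M0 * exp (- sigma * INR j - (c - lam / 2) * (u - t0))); [lra|].
  apply Rmult_le_compat_l; [pose proof M0_pos; lra|]. apply exp_le_exp. lra.
Qed.

End Trajectory.

Lemma uniform_stability eps : 0 < eps -> exists del, 0 < del /\
  forall phi : R -> Vec n, PC tau phi -> supnorm tau phi < del ->
  forall T x, 0 < T -> IsSolOn tau tk f g t0 phi T x ->
  forall t, t0 <= t < t0 + T -> vnorm (x t) < eps.
Proof.
  intros Heps. pose proof (Kinf_pos a1 eps Ha1 Heps). pose proof (exp_pos (- mu)).
  set (q := a1 eps * exp (- mu) / 3).
  assert (Hq : 0 < q) by (unfold q; apply Rdiv_lt_0_compat; [nra | lra]).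
  assert (Hq3 : 3 * q * exp mu = a1 eps).
  { unfold q. replace (3 * (a1 eps * exp (- mu) / 3) * exp mu) with (a1 eps * (exp (- mu) * exp mu))
      by field.
    rewrite <- exp_plus, Rplus_opp_l, exp_0. ring. }
  destruct (Kinf_small a2 q Ha2 Hq) as [d2 [Hd2 Hsmall2]].
  destruct (Kinf_small a3 q Ha3 Hq) as [d3 [Hd3 Hsmall3]].
  exists (Rmin d2 d3). split; [apply Rmin_pos; assumption|].
  intros phi HPC Hphi T x HT Hsol t Ht.
  pose proof (Rmin_l d2 d3). pose proof (Rmin_r d2 d3).
  pose proof (sol_estimate phi T x q HPC Hsol Hq t Ht) as Hest.
  set (P := supnorm tau phi) in *.
  assert (HP : 0 <= P) by exact (supnorm_nonneg n tau phi Htau HPC).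
  specialize (Hsmall2 P ltac:(lra)). specialize (Hsmall3 P ltac:(lra)).
  pose proof (Kinf_nonneg a2 P Ha2 HP). pose proof (Kinf_nonneg a3 P Ha3 HP).
  assert (Hdecay : exp (- (lam / 2) * (t - t0)) <= 1) by (rewrite <- exp_0; apply exp_le_exp; nra).
  pose proof (exp_pos mu). pose proof (exp_pos (- (lam / 2) * (t - t0))).
  apply (Kinf_lt_inv a1 _ _ Ha1 (vnorm_nonneg _ (x t))); [lra|].
  assert (HM : 0 < (a2 P + a3 P + q) * exp mu < a1 eps) by (split; nra).
  nra.
Qed.

Lemma global_attractivity : WellPosed tau tk f g -> forall phi : R -> Vec n, PC tau phi ->
  exists x, (forall T, 0 < T -> IsSolOn tau tk f g t0 phi T x) /\
    forall eps, 0 < eps -> exists T0, forall t, T0 <= t -> vnorm (x t) < eps.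
Proof.
  intros HWP phi HPC.
  destruct (HWP t0 phi Ht0 HPC) as [x [Gam [HGam [Hsolx [_ Hblowup]]]]].
  set (R0 := (a2 (supnorm tau phi) + a3 (supnorm tau phi) + 1) * exp mu).
  assert (Hbound : forall T, 0 < T -> IsSolOn tau tk f g t0 phi T x ->
            forall t, t0 <= t < t0 + T -> a1 (vnorm (x t)) <= R0 * exp (- (lam / 2) * (t - t0)))
    by (intros T HT Hs t Ht; apply (sol_estimate phi T x 1 HPC Hs ltac:(lra) t Ht)).
  assert (HR0 : 0 < R0).
  { pose proof (Kinf_nonneg a2 _ Ha2 (supnorm_nonneg n tau phi Htau HPC)).
    pose proof (Kinf_nonneg a3 _ Ha3 (supnorm_nonneg n tau phi Htau HPC)).
    pose proof (exp_pos mu). unfold R0. nra. }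
  assert (Hglobal : Gam = p_infty).
  { destruct Gam as [G| |]; [exfalso | reflexivity | simpl in HGam; contradiction].
    destruct Ha1 as [_ [_ [Hmono Hunbounded]]]. destruct (Hunbounded R0) as [M [HM HaM]].
    destruct (Hblowup G eq_refl M) as [t [Ht HMt]].
    pose proof (Hbound G HGam (Hsolx G HGam (Rbar_le_refl G)) t Ht).
    assert (exp (- (lam / 2) * (t - t0)) <= 1) by (rewrite <- exp_0; apply exp_le_exp; nra).
    pose proof (Hmono M (vnorm (x t)) HM HMt). nra. }
  subst Gam. exists x. split; [intros T HT; apply Hsolx; [exact HT | exact I]|].
  intros eps Heps. pose proof (Kinf_pos a1 eps Ha1 Heps).
  destruct (exp_decay_below R0 (a1 eps) (lam / 2) t0 ltac:(assumption) ltac:(lra)) as [T0 HT0].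
  exists (Rmax T0 t0). intros t Ht. pose proof (Rmax_l T0 t0). pose proof (Rmax_r T0 t0).
  apply (Kinf_lt_inv a1 _ _ Ha1 (vnorm_nonneg _ (x t))); [lra|].
  eapply Rle_lt_trans; [apply (Hbound (t - t0 + 1)); [lra | apply Hsolx; [lra | exact I] | lra]|].
  apply HT0. lra.
Qed.

End Lyapunov.

Theorem theorem1
  (n : nat) (tau t0 : R) (tk : nat -> R)
  (f g : R -> (R -> Vec n) -> Vec n)
  (V1 : R -> Vec n -> R) (V2 : R -> (R -> Vec n) -> R)
  (a1 a2 a3 : R -> R) (c rho1 rho2 mu lam kap : R) :
  0 < tau -> 0 <= t0 ->
  tk 0%nat = t0 -> (forall k, tk k < tk (S k)) ->
  (forall M, exists k, M < tk k) ->
  (forall t, f t (fun _ => vzero) = vzero) ->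
  (forall t, g t (fun _ => vzero) = vzero) ->
  WellPosed tau tk f g ->
  V0 V1 -> V0star tau V2 ->
  Kinf a1 -> Kinf a2 -> Kinf a3 ->
  0 <= rho1 -> 0 <= rho2 -> 0 <= mu -> 0 < lam -> 0 < kap ->
  (* (i) *)
  (forall t (y : Vec n), a1 (vnorm y) <= V1 t y <= a2 (vnorm y)) ->
  (forall t psi, 0 <= t -> PC tau psi ->
     0 <= V2 t psi <= a3 (supnorm tau psi)) ->
  (* (ii) D^+ V(t,psi) <= - c V(t,psi), V(t,psi) = V1(t,psi(0)) + V2(t,psi) *)
  (forall t psi, 0 <= t -> PC tau psi ->
   forall T x, 0 < T -> IsSolOn tau tk f g t psi T x ->
   forall eps, 0 < eps -> exists del, 0 < del /\
     forall h, 0 < h < del -> h < T ->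
       (V1 (t + h) (x (t + h)) + V2 (t + h) (seg tau x (t + h))
        - (V1 t (psi 0) + V2 t psi)) / h
       <= - c * (V1 t (psi 0) + V2 t psi) + eps) ->
  (* (iii) ; L s = V1(t^- + s, psi(s)) *)
  (forall t psi, 0 <= t -> PC tau psi ->
   forall L : R -> R,
     (forall s, -tau <= s <= 0 ->
        has_llim rdist (fun u => V1 u (psi s)) (t + s) (L s)) ->
   forall M, (forall s, -tau <= s <= 0 -> L s <= M) ->
     V1 t (vadd (psi 0) (g t psi)) <= rho1 * L 0 + rho2 * M) ->
  (* (iv) *)
  (forall t psi, 0 <= t -> PC tau psi ->
   forall M, (forall s, -tau <= s <= 0 -> V1 (t + s) (psi s) <= M) ->
     V2 t psi <= kap * M) ->
  (* (v) *)
  (exists sigma : R,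
     ((0 < c /\ 1 <= rho1 /\ sigma = - ln (rho1 + rho2 * exp (c * tau))) \/
      (0 < c /\ rho1 < 1 /\
         1 <= rho1 + ((1 - rho1) * kap + rho2) * exp (c * tau) /\
         sigma = - ln (rho1 + ((1 - rho1) * kap + rho2) * exp (c * tau))) \/
      (0 < c /\ rho1 < 1 /\
         rho1 + ((1 - rho1) * kap + rho2) * exp (c * tau) < 1 /\
         0 < sigma /\
         forall k m, IsN tk (tk k) (tk k - tau) m ->
           rho1 * exp sigma + ((1 - rho1) * kap + rho2) * exp (c * tau)
             * exp (sigma * INR m) <= 1) \/
      (c <= 0 /\ rho1 < 1 /\ rho1 + (1 - rho1) * kap + rho2 < 1 /\
         0 < sigma /\
         forall k m, IsN tk (tk k) (tk k - tau) m ->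
           rho1 * exp sigma + ((1 - rho1) * kap + rho2)
             * exp (sigma * INR m) <= 1)) /\
     forall t s m, t0 <= s < t -> IsN tk t s m ->
       - sigma * INR m - (c - lam) * (t - s) <= mu) ->
  GAS tau tk f g t0.

Proof.
  intros Htau Ht0 Htk0 Htkinc Htkunb _ _ HWP HV1 HV2 Ha1 Ha2 Ha3 Hr1 Hr2 Hmu Hlam Hkap
    Hi1 Hi2 Hii Hiii Hiv [sigma [Hsigma Hv]].
  split.
  - apply (uniform_stability n tau t0 tk f g V1 V2 a1 a2 a3 c rho1 rho2 mu lam kap sigma); assumption.
  - apply (global_attractivity n tau t0 tk f g V1 V2 a1 a2 a3 c rho1 rho2 mu lam kap sigma); assumption.
Qed.
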